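(* Assume (A1). For all $x,y\in J$, $$\mathcal{D}_0(y,x)=\min\big(\mathcal{D}_{\mathrm{straight}}(y,x),\,\mathcal{D}_{\mathrm{junction}}(y,x)\big).$$
   Context: Junction: fix an integer $N\ge1$ and $N$ distinct unit vectors $e_1,\dots,e_N\in\mathbb{R}^2$. Set $J_i=[0,\infty)e_i$, $J_i^*=J_i\setminus\{0\}$, $J=\bigcup_{i=1}^NJ_i$, $I_N=\{1,\dots,N\}$. Each $x\in J_i$ is written $x=x_ie_i$, $x_i\ge0$. (A1): there is $\gamma>0$ with $L_i\in C^2(\mathbb{R})$, $L_i''\ge\gamma$ for each $i\in I_N$. $L_0(p)=\min_jL_j(p)$. Reduced minimal action: $A(x)=\mathbb{R}e_i$ if $x\in J_i^*$, $A(0)=\bigcup_i[0,\infty)e_i$; for $P=pe_i\in A(x)$, $L(x,P)=L_i(p)$ if $x\in J_i^*$, $L(0,P)=L_0(p)$. $\mathcal{A}(0,y;1,x)$ is the set of $X\in W^{1,1}([0,1];\mathbb{R}^2)$ with $X(\tau)\in J$, $\dot X(\tau)\in A(X(\tau))$ a.e., $X(0)=y$, $X(1)=x$; $\mathcal{D}_0(y,x)=\inf_{X\in\mathcal{A}(0,y;1,x)}\int_0^1L(X,\dot X)\,d\tau$. Auxiliary functions: $\mathcal{D}_{\mathrm{straight}}(y,x)=L_i(x_i-y_i)$ if $(y,x)\in J_i\times J_i\setminus\{(0,0)\}$ for some $i$; $=L_0(0)$ if $y=x=0$; $=+\infty$ otherwise. For $\tau\in[0,1]$: $\mathcal{E}_1(\tau,y)=\tau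 L_j(-y_j/\tau)-\tau L_0(0)$ if $y=y_je_j\ne0$ and $\tau\ne0$; $\mathcal{E}_1(\tau,0)=0$; $\mathcal{E}_1(0,y)=+\infty$ if $y\ne0$. $\mathcal{E}_2(\tau,x)=(1-\tau)L_i(x_i/(1-\tau))+\tau L_0(0)$ if $x=x_ie_i\ne0$ and $\tau\ne1$; $\mathcal{E}_2(\tau,0)=L_0(0)$; $\mathcal{E}_2(1,x)=+\infty$ if $x\ne0$. $\mathcal{D}_{\mathrm{junction}}(y,x)=\inf_{0\le\tau_1\le\tau_2\le1}\{\mathcal{E}_1(\tau_1,y)+\mathcal{E}_2(\tau_2,x)\}$. *)

From Stdlib Require Import Reals Lra Lia Classical ClassicalEpsilon.
Open Scope R_scope.

Definition pt := (R * R)%type.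
Definition pzero : pt := (0, 0).
Definition scal (t : R) (u : pt) : pt := (t * fst u, t * snd u).
Definition psub (u v : pt) : pt := (fst u - fst v, snd u - snd v).
Definition dot (u v : pt) : R := fst u * fst v + snd u * snd v.
Definition pnorm (u : pt) : R := sqrt (dot u u).

Inductive Rbar := Fin (r : R) | PInf | MInf.

Definition Rbar_le (a b : Rbar) : Prop :=
  match a, b with
  | MInf, _ => True
  | _, PInf => True
  | Fin x, Fin y => x <= y
  | _, _ => False
  end.

Definition Rbar_plus (a b : Rbar) : Rbar :=
  match a, b with
  | Fin x, Fin y => Fin (x + y)
  | PInf, _ | _, PInf => PInf
  | _, _ => MInf
  end.

Definition Rbar_min (a b : Rbar) : Rbar :=
  match a, b with
  | MInf, _ | _, MInf => MInf
  | PInf, c | c, PInf => c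
  | Fin x, Fin y => Fin (Rmin x y)
  end.

Definition is_glb (S : Rbar -> Prop) (m : Rbar) : Prop :=
  (forall z, S z -> Rbar_le m z) /\
  (forall m', (forall z, S z -> Rbar_le m' z) -> Rbar_le m' m).

(** the infimum (a glb always exists in the extended reals; it is unique) *)
Definition Einf (S : Rbar -> Prop) : Rbar :=
  epsilon (inhabits PInf) (is_glb S).

(** "the unique v such that P v" (used for case-wise definitions whose
    branch index is unique) *)
Definition the_Rbar (P : Rbar -> Prop) : Rbar := epsilon (inhabits PInf) P.

Definition negligible (S : R -> Prop) : Prop :=
  forall eps, 0 < eps -> exists a b : nat -> R,
    (forall n, a n <= b n) /\
    (forall t, S t -> exists n, a n < t < b n) /\
    (forall n, sum_f_R0 (fun k => b k - a k) n <= eps).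

Definition ae01 (P : R -> Prop) : Prop :=
  negligible (fun t => 0 <= t <= 1 /\ ~ P t).

Fixpoint rsum (f : nat -> R) (n : nat) : R :=
  match n with O => 0 | S m => rsum f m + f m end.

(** * McShane integral on [0,1] (coincides with the Lebesgue integral:
      f is McShane integrable on [0,1] with integral I iff f is Lebesgue
      integrable on [0,1] with integral I). *)
Definition mcshane01 (f : R -> R) (I : R) : Prop :=
  forall eps, 0 < eps -> exists delta : R -> R,
    (forall t, 0 <= t <= 1 -> 0 < delta t) /\
    forall (n : nat) (x tg : nat -> R),
      x O = 0 -> x n = 1 ->
      (forall k, (k < n)%nat -> x k <= x (S k)) ->
      (forall k, (k < n)%nat ->
         0 <= tg k <= 1 /\ tg k - delta (tg k) < x k /\
         x (S k) < tg k + delta (tg k)) ->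
      Rabs (rsum (fun k => f (tg k) * (x (S k) - x k)) n - I) < eps.

(** * Absolutely continuous curves [0,1] -> R^2  (= W^{1,1} representatives) *)
Definition abs_cont01 (X : R -> pt) : Prop :=
  forall eps, 0 < eps -> exists delta, 0 < delta /\
    forall (n : nat) (a b : nat -> R),
      (forall k, (k < n)%nat -> 0 <= a k /\ a k <= b k /\ b k <= 1) ->
      (forall k, (S k < n)%nat -> b k <= a (S k)) ->
      rsum (fun k => b k - a k) n < delta ->
      rsum (fun k => pnorm (psub (X (b k)) (X (a k)))) n < eps.

Definition has_deriv (X : R -> pt) (t : R) (V : pt) : Prop :=
  derivable_pt_lim (fun s => fst (X s)) t (fst V) /\
  derivable_pt_lim (fun s => snd (X s)) t (snd V).

(** * Hypothesis (A1) on a single L_i *)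
Definition C2_convex (gamma : R) (f : R -> R) : Prop :=
  exists f1 f2 : R -> R,
    (forall p, derivable_pt_lim f p (f1 p)) /\
    (forall p, derivable_pt_lim f1 p (f2 p)) /\
    continuity f2 /\
    (forall p, gamma <= f2 p).

Section Junction.
(* N branches, directions e 0, ..., e (N-1) (indices shifted by one
   with respect to the paper's I_N = {1..N}), Lagrangians L 0, ..., L (N-1). *)
Variable N : nat.
Variable e : nat -> pt.
Variable L : nat -> R -> R.

Fixpoint Lmin (n : nat) (p : R) : R :=
  match n with O => L O p | S m => Rmin (Lmin m p) (L (S m) p) end.
Definition L0 (p : R) : R := Lmin (N - 1) p.

Definition inJi (i : nat) (x : pt) : Prop := exists t, 0 <= t /\ x = scal t (e i).
Definition inJstar (i : nat) (x : pt) : Prop := exists t, 0 < t /\ x = scal t (e i).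
Definition inJ (x : pt) : Prop := exists i, (i < N)%nat /\ inJi i x.
Definition coord (i : nat) (x : pt) : R := dot x (e i).

Definition Aset (x P : pt) : Prop :=
  (exists i, (i < N)%nat /\ inJstar i x /\ exists p, P = scal p (e i)) \/
  (x = pzero /\ exists i, (i < N)%nat /\ exists p, 0 <= p /\ P = scal p (e i)).

Definition Lrel (x P : pt) (v : R) : Prop :=
  (exists i, (i < N)%nat /\ inJstar i x /\
     exists p, P = scal p (e i) /\ v = L i p) \/
  (x = pzero /\ exists i, (i < N)%nat /\
     exists p, 0 <= p /\ P = scal p (e i) /\ v = L0 p).

(** X ∈ A(0,y;1,x), with V a (version of the a.e.-defined) derivative of X *)
Definition admissible (X : R -> pt) (V : R -> pt) (y x : pt) : Prop :=
  (forall t, 0 <= t <= 1 -> inJ (X t)) /\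
  abs_cont01 X /\ X 0 = y /\ X 1 = x /\
  ae01 (fun t => has_deriv X t (V t) /\ Aset (X t) (V t)).

Definition has_cost (X V : R -> pt) (c : R) : Prop :=
  exists f : R -> R,
    ae01 (fun t => Lrel (X t) (V t) (f t)) /\ mcshane01 f c.

(** D_0(y,x): infimum of the actions (curves of infinite action do not
    change the infimum) *)
Definition D0 (y x : pt) : Rbar :=
  Einf (fun z => exists X V c, admissible X V y x /\ has_cost X V c /\ z = Fin c).

Definition Dstraight (y x : pt) : Rbar :=
  the_Rbar (fun v =>
    (exists i, (i < N)%nat /\ inJi i y /\ inJi i x /\ ~ (y = pzero /\ x = pzero) /\
       v = Fin (L i (coord i x - coord i y))) \/
    (y = pzero /\ x = pzero /\ v = Fin (L0 0)) \/
    (~ (exists i, (i < N)%nat /\ inJi i y /\ inJi i x) /\ v = PInf)).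

Definition E1 (tau : R) (y : pt) : Rbar :=
  the_Rbar (fun v =>
    (exists j, (j < N)%nat /\ inJstar j y /\ tau <> 0 /\
       v = Fin (tau * L j (- coord j y / tau) - tau * L0 0)) \/
    (y = pzero /\ v = Fin 0) \/
    (tau = 0 /\ y <> pzero /\ v = PInf)).

Definition E2 (tau : R) (x : pt) : Rbar :=
  the_Rbar (fun v =>
    (exists i, (i < N)%nat /\ inJstar i x /\ tau <> 1 /\
       v = Fin ((1 - tau) * L i (coord i x / (1 - tau)) + tau * L0 0)) \/
    (x = pzero /\ v = Fin (L0 0)) \/
    (tau = 1 /\ x <> pzero /\ v = PInf)).

Definition Djunction (y x : pt) : Rbar :=
  Einf (fun z => exists t1 t2, 0 <= t1 /\ t1 <= t2 /\ t2 <= 1 /\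
                  z = Rbar_plus (E1 t1 y) (E2 t2 x)).

End Junction.

(* The lower bound is a calibration argument.  An admissible curve either never meets
   the junction, and then stays on a single branch J_i^*, or it has a first and a last
   visit t1 <= t2 to the origin.  Along the curve we build a function g out of supporting
   lines of the convex L_k: on [0, t1] the one of L_j at the mean speed -a/t1, on [t2, 1]
   the one of L_i at b/(1-t2), and on [t1, t2] the potential L_0(0) t + L_k'(0) z_k,
   which works because L_k(p) >= L_k(0) + L_k'(0) p >= L_0(0) + L_k'(0) p.  Then g is
   absolutely continuous and its straddle derivative is at most the running cost almost
   everywhere, so by an FTC inequality for the McShane integral (via Cousin's lemma) the
   action is at least g(1) - g(0), which is the straight, resp. the junction, value.
   Conversely, the straight segment, resp. the curve that runs to the origin at constant
   speed, rests there and leaves at constant speed, has exactly that action. *)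

From Pilot Require Import Defs.
From Stdlib Require Import Reals Lra Lia ClassicalEpsilon FunctionalExtensionality Cantor ZArith.
Open Scope R_scope.

Lemma rsum_ext f g n : (forall k, (k < n)%nat -> f k = g k) -> rsum f n = rsum g n.
Proof.
  induction n; simpl; intros H; auto.
  rewrite IHn by (intros; apply H; lia). rewrite H by lia. auto.
Qed.

Lemma rsum_plus f g n : rsum (fun k => f k + g k) n = rsum f n + rsum g n.
Proof. induction n; simpl; [lra | rewrite IHn; lra]. Qed.

Lemma rsum_minus f g n : rsum (fun k => f k - g k) n = rsum f n - rsum g n.
Proof. induction n; simpl; [lra | rewrite IHn; lra]. Qed.

Lemma rsum_scal c f n : rsum (fun k => c * f k) n = c * rsum f n.
Proof. induction n; simpl; [lra | rewrite IHn; lra]. Qed.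

Lemma rsum_le f g n : (forall k, (k < n)%nat -> f k <= g k) -> rsum f n <= rsum g n.
Proof.
  induction n; simpl; intros H; [lra |].
  assert (rsum f n <= rsum g n) by (apply IHn; intros; apply H; lia).
  assert (f n <= g n) by (apply H; lia). lra.
Qed.

Lemma rsum_nonneg f n : (forall k, (k < n)%nat -> 0 <= f k) -> 0 <= rsum f n.
Proof.
  intros H. replace 0 with (rsum (fun _ => 0) n) by (clear H; induction n; simpl; lra).
  apply rsum_le; auto.
Qed.

Lemma rsum_telescope h n : rsum (fun k => h (S k) - h k) n = h n - h O.
Proof. induction n; simpl; [lra | rewrite IHn; lra]. Qed.

Lemma rsum_term_le f n i :
  (forall k, (k < n)%nat -> 0 <= f k) -> (i < n)%nat -> f i <= rsum f n.
Proof.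
  induction n; intros H Hi; [lia |]. simpl. destruct (Nat.eq_dec i n).
  - subst. assert (0 <= rsum f n) by (apply rsum_nonneg; intros; apply H; lia). lra.
  - assert (f i <= rsum f n) by (apply IHn; [intros; apply H; lia | lia]).
    assert (0 <= f n) by (apply H; lia). lra.
Qed.

Lemma rsum_exchange (F : nat -> nat -> R) n m :
  rsum (fun k => rsum (fun j => F k j) m) n = rsum (fun j => rsum (fun k => F k j) n) m.
Proof.
  induction n; simpl.
  - induction m; simpl; auto. rewrite <- IHm; lra.
  - rewrite IHn, <- rsum_plus. auto.
Qed.

Lemma rsum_abs_le f n : Rabs (rsum f n) <= rsum (fun k => Rabs (f k)) n.
Proof.
  induction n; simpl. { rewrite Rabs_R0; lra. }
  eapply Rle_trans. apply Rabs_triang. lra.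
Qed.

Lemma rsum_le_n f n m : (forall k, 0 <= f k) -> (n <= m)%nat -> rsum f n <= rsum f m.
Proof. intros H Hnm. induction Hnm as [| m' _ IH]; [lra |]. simpl. specialize (H m'). lra. Qed.

Lemma sum_f_R0_rsum f n : sum_f_R0 f n = rsum f (S n).
Proof. induction n; simpl; [lra | rewrite IHn; auto]. Qed.

Lemma rsum_geometric eps n : rsum (fun k => eps * (/2) ^ S k) n = eps * (1 - (/2) ^ n).
Proof.
  induction n; [simpl; ring |].
  change (rsum (fun k => eps * (/2) ^ S k) n + eps * (/2) ^ S n = eps * (1 - (/2) ^ S n)).
  rewrite IHn. simpl. field.
Qed.

Definition padd (u v : pt) : pt := (fst u + fst v, snd u + snd v).

Lemma dot_nonneg u : 0 <= dot u u.
Proof. unfold dot. nra. Qed.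

Lemma dot_scal_l t u v : dot (scal t u) v = t * dot u v.
Proof. unfold dot, scal; simpl; ring. Qed.

Lemma pnorm_nonneg u : 0 <= pnorm u.
Proof. apply sqrt_pos. Qed.

Lemma pnorm_sq u : pnorm u * pnorm u = dot u u.
Proof. apply sqrt_sqrt, dot_nonneg. Qed.

Lemma pnorm_zero : pnorm pzero = 0.
Proof. unfold pnorm, dot, pzero; simpl. replace (0 * 0 + 0 * 0) with 0 by ring. apply sqrt_0. Qed.

Lemma pnorm_eq0 u : pnorm u = 0 -> u = pzero.
Proof.
  intros H. pose proof (pnorm_sq u) as Hsq. rewrite H in Hsq.
  destruct u as [a b]. unfold dot in Hsq; simpl in Hsq. unfold pzero. f_equal; nra.
Qed.

Lemma pnorm_le_of_sq u r : 0 <= r -> dot u u <= r * r -> pnorm u <= r.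
Proof. intros Hr H. unfold pnorm. rewrite <- (sqrt_square r) by auto. apply sqrt_le_1_alt. lra. Qed.

Lemma pnorm_ge_of_sq u r : 0 <= r -> r * r <= dot u u -> r <= pnorm u.
Proof. intros Hr H. unfold pnorm. rewrite <- (sqrt_square r) by auto. apply sqrt_le_1_alt. lra. Qed.

Lemma cauchy_schwarz u v : Rabs (dot u v) <= pnorm u * pnorm v.
Proof.
  apply Rsqr_incr_0_var; [| apply Rmult_le_pos; apply pnorm_nonneg].
  rewrite <- Rsqr_abs. unfold Rsqr.
  replace (pnorm u * pnorm v * (pnorm u * pnorm v)) with ((pnorm u * pnorm u) * (pnorm v * pnorm v)) by ring.
  rewrite !pnorm_sq. destruct u as [a b], v as [c d]; unfold dot; simpl.
  pose proof (Rle_0_sqr (a * d - b * c)). unfold Rsqr in *. nra.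
Qed.

Lemma pnorm_padd_le u v : pnorm (padd u v) <= pnorm u + pnorm v.
Proof.
  pose proof (pnorm_nonneg u); pose proof (pnorm_nonneg v).
  apply pnorm_le_of_sq; [lra |].
  pose proof (cauchy_schwarz u v). pose proof (pnorm_sq u); pose proof (pnorm_sq v).
  assert (dot (padd u v) (padd u v) = dot u u + 2 * dot u v + dot v v) by (unfold dot, padd; simpl; ring).
  assert (dot u v <= Rabs (dot u v)) by apply Rle_abs. nra.
Qed.

Lemma pnorm_scal t u : pnorm (scal t u) = Rabs t * pnorm u.
Proof.
  unfold pnorm. replace (dot (scal t u) (scal t u)) with ((t * t) * dot u u) by (unfold dot, scal; simpl; ring).
  rewrite sqrt_mult by (apply Rle_0_sqr || apply dot_nonneg).
  rewrite <- Rsqr_def, sqrt_Rsqr_abs. auto.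
Qed.

Lemma pnorm_psub_sym u v : pnorm (psub u v) = pnorm (psub v u).
Proof. unfold pnorm, dot, psub; simpl. f_equal. ring. Qed.

Lemma psub_zero_r u : psub u pzero = u.
Proof. destruct u; unfold psub, pzero; simpl. f_equal; ring. Qed.

Lemma pnorm_le_abs_coords z : pnorm z <= Rabs (fst z) + Rabs (snd z).
Proof.
  destruct z as [a b]; simpl. pose proof (Rabs_pos a); pose proof (Rabs_pos b).
  apply pnorm_le_of_sq; [lra |]. unfold dot; simpl.
  assert (Rabs a * Rabs a = a * a) by (rewrite <- Rabs_mult; apply Rabs_pos_eq; nra).
  assert (Rabs b * Rabs b = b * b) by (rewrite <- Rabs_mult; apply Rabs_pos_eq; nra).
  nra.
Qed.

Lemma scal_zero u : scal 0 u = pzero.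
Proof. unfold scal, pzero. f_equal; ring. Qed.

Lemma Rbar_le_antisym a b : Rbar_le a b -> Rbar_le b a -> a = b.
Proof. destruct a, b; simpl; intros; try tauto; try (f_equal; lra); auto. Qed.

Lemma Rbar_le_trans a b c : Rbar_le a b -> Rbar_le b c -> Rbar_le a c.
Proof. destruct a, b, c; simpl; intros; try tauto; lra. Qed.

Lemma Rbar_le_PInf a : Rbar_le a PInf.
Proof. destruct a; simpl; auto. Qed.

Lemma Rbar_plus_PInf_r a : Rbar_plus a PInf = PInf.
Proof. destruct a; simpl; auto. Qed.

Lemma Rbar_min_le_l a b : Rbar_le (Rbar_min a b) a.
Proof. destruct a, b; simpl; auto; try lra. apply Rmin_l. Qed.

Lemma Rbar_min_le_r a b : Rbar_le (Rbar_min a b) b.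
Proof. destruct a, b; simpl; auto; try lra. apply Rmin_r. Qed.

Lemma Rbar_min_glb a b c : Rbar_le c a -> Rbar_le c b -> Rbar_le c (Rbar_min a b).
Proof. destruct a, b, c; simpl; auto; try tauto. intros; apply Rmin_glb; auto. Qed.

Lemma is_glb_exists S : exists m, is_glb S m.
Proof.
  destruct (classic (S MInf)) as [HM | HM].
  { exists MInf. split; [intros; simpl; auto | intros m' H; apply H; auto]. }
  destruct (classic (exists r, S (Fin r))) as [[r0 Hr0] | Hnone].
  2:{ exists PInf. split.
      - intros [r | |] Hz; simpl; auto. apply Hnone; eauto.
      - intros [] _; simpl; auto. }
  destruct (classic (exists b, forall r, S (Fin r) -> b <= r)) as [[b Hb] | Hunb].
  - assert (Hbd : bound (fun x => S (Fin (- x)))).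
    { exists (- b). intros x Hx. specialize (Hb _ Hx). lra. }
    assert (Hne : exists x, S (Fin (- x))) by (exists (- r0); rewrite Ropp_involutive; auto).
    destruct (completeness _ Hbd Hne) as [l [Hl1 Hl2]].
    exists (Fin (- l)). split.
    + intros [r | |] Hz; simpl; auto.
      assert (- r <= l) by (apply Hl1; rewrite Ropp_involutive; auto). lra.
    + intros [r | |] Hm; simpl; auto.
      * assert (l <= - r) by (apply Hl2; intros x Hx; specialize (Hm _ Hx); simpl in Hm; lra). lra.
      * specialize (Hm _ Hr0). simpl in Hm. auto.
  - exists MInf. split; [intros; simpl; auto |].
    intros [r | |] Hm; simpl; auto.
    + apply Hunb. exists r. intros r' Hr'. specialize (Hm _ Hr'). simpl in Hm. auto.
    + specialize (Hm _ Hr0). simpl in Hm. auto.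
Qed.

Lemma Einf_is_glb S : is_glb S (Einf S).
Proof. unfold Einf. apply epsilon_spec, is_glb_exists. Qed.

Lemma Einf_le S z : S z -> Rbar_le (Einf S) z.
Proof. intros Hz. apply (proj1 (Einf_is_glb S)), Hz. Qed.

Lemma le_Einf S m : (forall z, S z -> Rbar_le m z) -> Rbar_le m (Einf S).
Proof. intros H. apply (proj2 (Einf_is_glb S)), H. Qed.

Lemma the_Rbar_eq (P : Rbar -> Prop) v : P v -> (forall w, P w -> w = v) -> the_Rbar P = v.
Proof. intros Hv Hu. unfold the_Rbar. apply Hu, epsilon_spec. eauto. Qed.

Lemma Rabs_lt_iff x a : Rabs x < a <-> - a < x /\ x < a.
Proof. unfold Rabs; destruct Rcase_abs; split; intros; lra. Qed.

Lemma Rabs_le_iff x a : Rabs x <= a <-> - a <= x /\ x <= a.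
Proof. unfold Rabs; destruct Rcase_abs; split; intros; lra. Qed.

(** * Null sets *)

Lemma negligible_subset (A B : R -> Prop) :
  negligible A -> (forall t, B t -> A t) -> negligible B.
Proof.
  intros HA HBA eps Heps. destruct (HA eps Heps) as [a [b [H1 [H2 H3]]]].
  exists a, b. repeat split; auto.
Qed.

Definition interleave (u v : nat -> R) (k : nat) : R :=
  if Nat.even k then u (Nat.div2 k) else v (Nat.div2 k).

Lemma interleave_even u v m : interleave u v (2 * m) = u m.
Proof.
  unfold interleave. rewrite Nat.even_mul, Nat.div2_double. auto.
Qed.

Lemma interleave_odd u v m : interleave u v (S (2 * m)) = v m.
Proof.
  unfold interleave. rewrite Nat.even_succ, Nat.odd_mul, Nat.div2_succ_double. auto.
Qed.

Lemma rsum_interleave u v m : rsum (interleave u v) (2 * m) = rsum u m + rsum v m.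
Proof.
  induction m; [simpl; lra |].
  replace (2 * S m)%nat with (S (S (2 * m))) by lia.
  change (rsum (interleave u v) (2 * m) + interleave u v (2 * m) + interleave u v (S (2 * m))
    = rsum u m + u m + (rsum v m + v m)).
  rewrite IHm, interleave_even, interleave_odd. lra.
Qed.

Lemma negligible_union (A B : R -> Prop) :
  negligible A -> negligible B -> negligible (fun t => A t \/ B t).
Proof.
  intros HA HB eps Heps.
  destruct (HA (eps / 2) ltac:(lra)) as [a1 [b1 [H1 [H2 H3]]]].
  destruct (HB (eps / 2) ltac:(lra)) as [a2 [b2 [H1' [H2' H3']]]].
  exists (interleave a1 a2), (interleave b1 b2). split; [| split].
  - intros n; unfold interleave; destruct (Nat.even n); auto.
  - intros t [Ht | Ht].
    + destruct (H2 t Ht) as [n Hn]. exists (2 * n)%nat. rewrite !interleave_even. auto.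
    + destruct (H2' t Ht) as [n Hn]. exists (S (2 * n)). rewrite !interleave_odd. auto.
  - intros n. rewrite sum_f_R0_rsum.
    assert (Hnn : forall k, 0 <= interleave b1 b2 k - interleave a1 a2 k).
    { intros k; unfold interleave; destruct (Nat.even k);
        [specialize (H1 (Nat.div2 k)) | specialize (H1' (Nat.div2 k))]; lra. }
    apply Rle_trans with (rsum (fun k => interleave b1 b2 k - interleave a1 a2 k) (2 * S n)).
    { apply rsum_le_n; auto. lia. }
    rewrite (rsum_ext _ (interleave (fun k => b1 k - a1 k) (fun k => b2 k - a2 k)))
      by (intros; unfold interleave; destruct (Nat.even k); auto).
    rewrite rsum_interleave. specialize (H3 n); specialize (H3' n).
    rewrite sum_f_R0_rsum in H3, H3'. lra.
Qed.

Lemma negligible_countable (A : R -> Prop) (p : nat -> R) :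
  (forall t, A t -> exists n, t = p n) -> negligible A.
Proof.
  intros Hp eps Heps.
  assert (Hpow : forall n, 0 < (/2) ^ n) by (intros; apply pow_lt; lra).
  exists (fun n => p n - eps * (/2) ^ S (S n)), (fun n => p n + eps * (/2) ^ S (S n)).
  split; [| split].
  - intros n. specialize (Hpow (S (S n))). nra.
  - intros t Ht. destruct (Hp t Ht) as [n ->]. exists n. specialize (Hpow (S (S n))). nra.
  - intros n. rewrite sum_f_R0_rsum.
    rewrite (rsum_ext _ (fun k => eps * (/2) ^ S k)) by (intros; simpl; field).
    rewrite rsum_geometric. specialize (Hpow (S n)). nra.
Qed.

Lemma negligible_point a : negligible (fun t => t = a).
Proof. apply (negligible_countable _ (fun _ => a)). intros t ->. exists O. auto. Qed.

(* The dyadic interval of radius 2 * 2^-m centred at j 2^-m, j = j1 - j2, indexed by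
   the Cantor code of (m, (j1, j2)). *)
Definition dyadic_center (n : nat) : R :=
  let (m, p) := of_nat n in let (j1, j2) := of_nat p in (INR j1 - INR j2) * (/2) ^ m.
Definition dyadic_radius (n : nat) : R := 2 * (/2) ^ fst (of_nat n).

Lemma IZR_as_INR_diff k : IZR k = INR (Z.to_nat k) - INR (Z.to_nat (- k)).
Proof.
  rewrite !INR_IZR_INZ. destruct (Z_le_gt_dec 0 k).
  - rewrite Z2Nat.id by lia. replace (Z.to_nat (- k)) with O by lia. simpl. lra.
  - rewrite (Z2Nat.id (- k)) by lia. replace (Z.to_nat k) with O by lia. simpl.
    rewrite opp_IZR. lra.
Qed.

Lemma dyadic_window t r : 0 < r ->
  exists n, Rabs (t - dyadic_center n) < dyadic_radius n /\ 2 * dyadic_radius n < r.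
Proof.
  intros Hr.
  destruct (pow_lt_1_zero (/2) ltac:(rewrite Rabs_pos_eq; lra) (r / 4) ltac:(lra)) as [m Hm].
  specialize (Hm m (le_n _)). assert (Hw : 0 < (/2) ^ m) by (apply pow_lt; lra).
  rewrite Rabs_pos_eq in Hm by lra. set (w := (/2) ^ m) in *.
  set (k := (up (t / w) - 1)%Z).
  assert (Hk : IZR k <= t / w < IZR k + 1).
  { unfold k. rewrite minus_IZR. destruct (archimed (t / w)). simpl. lra. }
  assert (Hkw : IZR k * w <= t < IZR k * w + w).
  { replace t with (t / w * w) by (field; lra). split; nra. }
  exists (to_nat (m, to_nat (Z.to_nat k, Z.to_nat (- k)))).
  unfold dyadic_center, dyadic_radius. rewrite !cancel_of_to. simpl. rewrite <- IZR_as_INR_diff.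
  fold w. split; [apply Rabs_lt_iff |]; lra.
Qed.

Lemma negligible_isolated (A : R -> Prop) :
  (forall t, A t -> exists r, 0 < r /\ forall s, A s -> Rabs (s - t) < r -> s = t) ->
  negligible A.
Proof.
  intros Hiso.
  set (alone := fun n t => A t /\ Rabs (t - dyadic_center n) < dyadic_radius n /\
    forall s, A s -> Rabs (s - dyadic_center n) < dyadic_radius n -> s = t).
  apply (negligible_countable A (fun n => epsilon (inhabits 0) (alone n))).
  intros t Ht. destruct (Hiso t Ht) as [r [Hr Hu]].
  destruct (dyadic_window t r Hr) as [n [Htn Hrn]].
  assert (Halone : alone n t).
  { split; [auto | split; [auto |]]. intros s Hs Hsn. apply Hu; auto.
    apply Rabs_lt_iff in Hsn, Htn. apply Rabs_lt_iff. lra. }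
  exists n. destruct (epsilon_spec (inhabits 0) (alone n) (ex_intro _ t Halone)) as [_ [_ Hu']].
  apply Hu'; auto.
Qed.

Lemma ae01_and P Q : ae01 P -> ae01 Q -> ae01 (fun t => P t /\ Q t).
Proof.
  intros HP HQ. eapply negligible_subset. apply (negligible_union _ _ HP HQ).
  intros t [Ht HPQ]. destruct (classic (P t)); [right | left]; split; auto; tauto.
Qed.

Lemma ae01_off_two_points (P : R -> Prop) p1 p2 :
  (forall t, 0 < t < 1 -> t <> p1 -> t <> p2 -> P t) -> ae01 P.
Proof.
  intros H. unfold ae01.
  apply (negligible_subset (fun t => ((t = 0 \/ t = 1) \/ t = p1) \/ t = p2)).
  { repeat apply negligible_union; apply negligible_point. }
  intros t [Ht Hn]. apply NNPP. intros Hc.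
  assert (t <> 0) by (intros ->; apply Hc; auto).
  assert (t <> 1) by (intros ->; apply Hc; auto).
  apply Hn, H; [lra | intros ->; apply Hc; auto ..].
Qed.

(** * The McShane integral on [0,1] *)

Definition fine_partition (delta : R -> R) (s : R) (n : nat) (x tg : nat -> R) : Prop :=
  x O = 0 /\ x n = s /\ (forall k, (k < n)%nat -> x k <= tg k <= x (S k)) /\
  (forall k, (k < n)%nat -> tg k - delta (tg k) < x k /\ x (S k) < tg k + delta (tg k)).

Lemma cousin delta :
  (forall t, 0 <= t <= 1 -> 0 < delta t) -> exists n x tg, fine_partition delta 1 n x tg.
Proof.
  intros Hd.
  set (E := fun s => 0 <= s <= 1 /\ exists n x tg, fine_partition delta s n x tg).
  assert (HE0 : E 0).
  { split; [lra |]. exists O, (fun _ => 0), (fun _ => 0). repeat split; intros; lia. }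
  assert (Hb : bound E) by (exists 1; intros s [Hs _]; lra).
  destruct (completeness E Hb (ex_intro _ 0 HE0)) as [sg [Hub Hlub]].
  assert (Hs0 : 0 <= sg) by (apply Hub; auto).
  assert (Hs1 : sg <= 1) by (apply Hlub; intros s [Hs _]; lra).
  pose proof (Hd sg (conj Hs0 Hs1)) as Hds.
  assert (Hex : exists s, E s /\ sg - delta sg < s).
  { apply NNPP. intros Hn. assert (sg <= sg - delta sg); [| lra]. apply Hlub. intros s Hs.
    destruct (Rle_lt_dec s (sg - delta sg)); auto. exfalso; apply Hn; eauto. }
  destruct Hex as [s [[Hs [n [x [tg [H1 [H2 [H3 H4]]]]]]] Hss]].
  assert (Hssg : s <= sg) by (apply Hub; split; eauto; exists n, x, tg; split; auto).
  set (sg' := Rmin 1 (sg + delta sg / 2)).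
  assert (HE' : E sg').
  { split; [unfold sg'; split; [apply Rmin_case; lra | apply Rmin_l] |].
    exists (S n), (fun k => if Nat.leb k n then x k else sg'),
      (fun k => if Nat.ltb k n then tg k else sg).
    split; [| split; [| split]].
    - simpl. auto.
    - destruct (Nat.leb_spec (S n) n); [lia | auto].
    - intros k Hk. destruct (Nat.leb_spec k n), (Nat.ltb_spec k n), (Nat.leb_spec (S k) n); try lia.
      + apply H3; lia.
      + replace k with n by lia. rewrite H2. split; [auto | unfold sg'; apply Rmin_case; lra].
    - intros k Hk. destruct (Nat.leb_spec k n), (Nat.ltb_spec k n), (Nat.leb_spec (S k) n); try lia.
      + apply H4; lia.
      + replace k with n by lia. rewrite H2. split; [lra |].
        unfold sg'. apply Rle_lt_trans with (sg + delta sg / 2); [apply Rmin_r | lra]. }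
  assert (Hsg' : sg' <= sg) by (apply Hub; auto).
  assert (Hone : sg' = 1) by (revert Hsg'; unfold sg'; apply Rmin_case_strong; intros; lra).
  rewrite Hone in HE'. apply HE'.
Qed.

Fixpoint max_upto (h : nat -> nat) (n : nat) : nat :=
  match n with O => O | S m => Nat.max (max_upto h m) (h m) end.

Lemma max_upto_ge h n k : (k < n)%nat -> (h k <= max_upto h n)%nat.
Proof.
  induction n; intros Hk; simpl; [lia |].
  destruct (Nat.eq_dec k n); [subst; lia |]. specialize (IHn ltac:(lia)). lia.
Qed.

Lemma nondecr_upto (x : nat -> R) n : (forall k, (k < n)%nat -> x k <= x (S k)) ->
  forall i j, (i <= j <= n)%nat -> x i <= x j.
Proof.
  intros H i j Hij. induction j; [replace i with O by lia; lra |].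
  destruct (Nat.eq_dec i (S j)); [subst; lra |].
  specialize (IHj ltac:(lia)). specialize (H j ltac:(lia)). lra.
Qed.

Definition ceil_abs (z : R) : nat := Z.to_nat (up (Rabs z)).

Lemma Rabs_le_ceil_abs z : Rabs z <= INR (ceil_abs z).
Proof.
  unfold ceil_abs. destruct (archimed (Rabs z)). pose proof (Rabs_pos z).
  rewrite INR_IZR_INZ, Z2Nat.id; [lra |]. apply le_IZR. simpl. lra.
Qed.

Definition clamp (A B z : R) : R := Rmax A (Rmin B z).

Lemma clamp_mono A B z w : z <= w -> clamp A B z <= clamp A B w.
Proof. intros. apply Rle_max_compat_l, Rle_min_compat_l. auto. Qed.

Lemma clamp_id A B z : A <= z <= B -> clamp A B z = z.
Proof. intros. unfold clamp. rewrite Rmin_right, Rmax_right by lra. auto. Qed.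

Lemma rsum_clamp_increments A B (x : nat -> R) n : A <= B ->
  rsum (fun k => clamp A B (x (S k)) - clamp A B (x k)) n <= B - A.
Proof.
  intros HAB. rewrite (rsum_telescope (fun k => clamp A B (x k))).
  unfold clamp, Rmax, Rmin. repeat destruct Rle_dec; lra.
Qed.

Lemma rsum_clamped_cover_le (A B : nat -> nat -> R) (budget : nat -> R) (x : nat -> R) n Lm Mm :
  (forall l m, A l m <= B l m) -> (forall l, rsum (fun m => B l m - A l m) Mm <= budget l) ->
  rsum (fun k => rsum (fun l => rsum (fun m =>
      (1 + INR l) * (clamp (A l m) (B l m) (x (S k)) - clamp (A l m) (B l m) (x k))) Mm) Lm) n
  <= rsum (fun l => (1 + INR l) * budget l) Lm.
Proof.
  intros HAB Hlen. rewrite rsum_exchange. apply rsum_le. intros l _.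
  rewrite rsum_exchange. pose proof (pos_INR l).
  apply Rle_trans with (rsum (fun m => (1 + INR l) * (B l m - A l m)) Mm).
  - apply rsum_le. intros m _. rewrite rsum_scal.
    apply Rmult_le_compat_l; [lra | apply rsum_clamp_increments, HAB].
  - rewrite rsum_scal. apply Rmult_le_compat_l; [lra | apply Hlen].
Qed.

Lemma negligible_covers (E : R -> Prop) (budget : nat -> R) :
  negligible E -> (forall l, 0 < budget l) -> exists A B : nat -> nat -> R,
  (forall l m, A l m <= B l m) /\ (forall l t, E t -> exists m, A l m < t < B l m) /\
  (forall l M, rsum (fun m => B l m - A l m) M <= budget l).
Proof.
  intros HE Hbudget.
  set (is_cover := fun l (ab : (nat -> R) * (nat -> R)) =>
     (forall m, fst ab m <= snd ab m) /\ (forall t, E t -> exists m, fst ab m < t < snd ab m) /\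
     (forall m, sum_f_R0 (fun k => snd ab k - fst ab k) m <= budget l)).
  set (cov := fun l => epsilon (inhabits ((fun _ : nat => 0), (fun _ : nat => 0))) (is_cover l)).
  assert (Hcov : forall l, is_cover l (cov l)).
  { intros l. apply epsilon_spec. destruct (HE (budget l) (Hbudget l)) as [a [b Hab]].
    exists (a, b). exact Hab. }
  exists (fun l m => fst (cov l) m), (fun l m => snd (cov l) m).
  split; [intros; apply Hcov | split; [intros; apply Hcov; auto |]].
  intros l [| M]; [simpl; apply Rlt_le, Hbudget |].
  rewrite <- sum_f_R0_rsum. apply Hcov.
Qed.

(* A null set carries an arbitrarily small weighted length: whatever the weight [w],
   the [E]-tagged part of a fine partition contributes at most [eta].  The points of
   weight level [l] are covered by intervals of total length [eta 2^-(l+1) / (1 + l)]. *)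
Lemma negligible_weighted_gauge (E : R -> Prop) (w : R -> R) eta :
  negligible E -> 0 < eta -> exists delta : R -> R,
  (forall t, E t -> 0 < delta t) /\
  forall n (x tg : nat -> R), (forall k, (k < n)%nat -> x k <= x (S k)) ->
    (forall k, (k < n)%nat -> E (tg k) ->
       tg k - delta (tg k) < x k /\ x (S k) < tg k + delta (tg k)) ->
    rsum (fun k => if excluded_middle_informative (E (tg k))
                   then w (tg k) * (x (S k) - x k) else 0) n <= eta.
Proof.
  intros HE Heta.
  assert (Hpow : forall l, 0 < (/2) ^ l) by (intros; apply pow_lt; lra).
  set (budget := fun l : nat => eta * (/2) ^ S l / (1 + INR l)).
  assert (Hbudget : forall l, 0 < budget l).
  { intros l. unfold budget. pose proof (pos_INR l). specialize (Hpow (S l)).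
    apply Rdiv_lt_0_compat; nra. }
  destruct (negligible_covers E budget HE Hbudget) as [A [B [HAB [Hcov Hlen]]]].
  set (lvl := fun t => ceil_abs (w t)).
  set (idx := fun t => epsilon (inhabits O) (fun m => A (lvl t) m < t < B (lvl t) m)).
  assert (Hidx : forall t, E t -> A (lvl t) (idx t) < t < B (lvl t) (idx t)).
  { intros t Ht. apply (epsilon_spec (inhabits O) (fun m => A (lvl t) m < t < B (lvl t) m)).
    apply Hcov; auto. }
  exists (fun t => Rmin (t - A (lvl t) (idx t)) (B (lvl t) (idx t) - t)). split.
  { intros t Ht. specialize (Hidx t Ht). apply Rmin_case; lra. }
  intros n x tg Hx Hfine.
  set (T := fun l m k => clamp (A l m) (B l m) (x (S k)) - clamp (A l m) (B l m) (x k)).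
  assert (HT : forall l m k, (k < n)%nat -> 0 <= (1 + INR l) * T l m k).
  { intros l m k Hk. pose proof (clamp_mono (A l m) (B l m) _ _ (Hx k Hk)).
    apply Rmult_le_pos; [pose proof (pos_INR l) | unfold T]; lra. }
  set (Lm := S (max_upto (fun k => lvl (tg k)) n)).
  set (Mm := S (max_upto (fun k => idx (tg k)) n)).
  apply Rle_trans with (rsum (fun k => rsum (fun l => rsum (fun m => (1 + INR l) * T l m k) Mm) Lm) n).
  - apply rsum_le. intros k Hk. destruct excluded_middle_informative as [HEt | HEt].
    2:{ apply rsum_nonneg; intros l _; apply rsum_nonneg; intros m _; auto. }
    set (l0 := lvl (tg k)). set (m0 := idx (tg k)).
    assert (HT0 : T l0 m0 k = x (S k) - x k).
    { specialize (Hfine k Hk HEt). pose proof (Rmin_l (tg k - A l0 m0) (B l0 m0 - tg k)).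
      pose proof (Rmin_r (tg k - A l0 m0) (B l0 m0 - tg k)). pose proof (Hx k Hk).
      unfold T. rewrite !clamp_id; fold l0 m0 in Hfine; lra. }
    apply Rle_trans with ((1 + INR l0) * T l0 m0 k).
    { rewrite HT0. apply Rmult_le_compat_r; [pose proof (Hx k Hk); lra |].
      pose proof (Rle_abs (w (tg k))). pose proof (Rabs_le_ceil_abs (w (tg k))).
      unfold l0, lvl. lra. }
    apply Rle_trans with (rsum (fun m => (1 + INR l0) * T l0 m k) Mm).
    + apply (rsum_term_le (fun m => (1 + INR l0) * T l0 m k)); [auto |].
      pose proof (max_upto_ge (fun k => idx (tg k)) n k Hk). unfold Mm, m0. simpl in *. lia.
    + apply (rsum_term_le (fun l => rsum (fun m => (1 + INR l) * T l m k) Mm)).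
      * intros; apply rsum_nonneg; auto.
      * pose proof (max_upto_ge (fun k => lvl (tg k)) n k Hk). unfold Lm, l0. simpl in *. lia.
  - eapply Rle_trans; [apply rsum_clamped_cover_le; auto |].
    rewrite (rsum_ext _ (fun l => eta * (/2) ^ S l))
      by (intros l _; unfold budget; pose proof (pos_INR l); field; lra).
    rewrite rsum_geometric. specialize (Hpow Lm). nra.
Qed.

(* One-sided absolute continuity of a real function on [0,1]. *)
Definition small_increments01 (g : R -> R) : Prop :=
  forall eps, 0 < eps -> exists eta, 0 < eta /\ forall n (a b : nat -> R),
    (forall k, (k < n)%nat -> 0 <= a k /\ a k <= b k /\ b k <= 1) ->
    (forall k, (S k < n)%nat -> b k <= a (S k)) ->
    rsum (fun k => b k - a k) n < eta ->
    rsum (fun k => g (b k) - g (a k)) n < eps.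

Definition straddle_at (ft : R) (g : R -> R) (t : R) : Prop :=
  forall eps, 0 < eps -> exists r, 0 < r /\
    forall u v, 0 <= u -> u <= t -> t <= v -> v <= 1 -> t - r < u -> v < t + r ->
      g v - g u <= (ft + eps) * (v - u).

Definition straddle_dominated (f g : R -> R) (E : R -> Prop) : Prop :=
  forall t, 0 <= t <= 1 -> ~ E t -> straddle_at (f t) g t.

Lemma small_increments01_selected g : small_increments01 g ->
  forall eps, 0 < eps -> exists eta, 0 < eta /\ forall n (x : nat -> R) (Q : nat -> Prop),
    (forall k, (k < n)%nat -> x k <= x (S k)) -> (forall k, (k <= n)%nat -> 0 <= x k <= 1) ->
    rsum (fun k => if excluded_middle_informative (Q k) then x (S k) - x k else 0) n < eta ->
    rsum (fun k => if excluded_middle_informative (Q k) then g (x (S k)) - g (x k) else 0) n < eps.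
Proof.
  intros Hac eps Heps. destruct (Hac eps Heps) as [eta [Heta Hsmall]]. exists eta. split; auto.
  intros n x Q Hx Hx01 Hlen.
  set (b := fun k => if excluded_middle_informative (Q k) then x (S k) else x k).
  rewrite (rsum_ext _ (fun k => g (b k) - g (x k)))
    by (intros k _; unfold b; destruct excluded_middle_informative; lra).
  apply Hsmall.
  - intros k Hk. pose proof (Hx k Hk). pose proof (Hx01 k ltac:(lia)). pose proof (Hx01 (S k) ltac:(lia)).
    unfold b. destruct excluded_middle_informative; lra.
  - intros k Hk. pose proof (Hx k ltac:(lia)). unfold b. destruct excluded_middle_informative; lra.
  - rewrite (rsum_ext _ (fun k => if excluded_middle_informative (Q k) then x (S k) - x k else 0)); auto.
    intros k _. unfold b. destruct excluded_middle_informative; lra.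
Qed.

(* On the good tags the straddle bound compares the increments of [g] with the Riemann
   sum of [f]; the bad tags carry so little length, even weighted by [1 + |f|], that
   both their [f]-part and, by absolute continuity, their [g]-part are small. *)
Lemma ftc_partition_bound (f g : R -> R) (E : R -> Prop) :
  negligible E -> small_increments01 g -> straddle_dominated f g E ->
  forall eps, 0 < eps -> exists delta, (forall t, 0 <= t <= 1 -> 0 < delta t) /\
  forall n x tg, fine_partition delta 1 n x tg ->
    g 1 - g 0 <= rsum (fun k => f (tg k) * (x (S k) - x k)) n + 3 * eps.
Proof.
  intros HE Hac Hst eps Heps.
  destruct (small_increments01_selected g Hac eps Heps) as [eta [Heta Hsel]].
  set (eta' := Rmin (eta / 2) eps).
  assert (Heta' : 0 < eta') by (unfold eta'; apply Rmin_case; lra).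
  assert (Heta2 : eta' <= eta / 2) by apply Rmin_l.
  assert (Heta3 : eta' <= eps) by apply Rmin_r.
  destruct (negligible_weighted_gauge E (fun t => 1 + Rabs (f t)) eta' HE Heta') as [dE [HdE HwE]].
  set (rr := fun t => epsilon (inhabits 1) (fun r => 0 < r /\ forall u v, 0 <= u -> u <= t -> t <= v -> v <= 1 ->
      t - r < u -> v < t + r -> g v - g u <= (f t + eps) * (v - u))).
  assert (Hrr : forall t, 0 <= t <= 1 -> ~ E t -> 0 < rr t /\ forall u v, 0 <= u -> u <= t -> t <= v -> v <= 1 ->
      t - rr t < u -> v < t + rr t -> g v - g u <= (f t + eps) * (v - u)).
  { intros t Ht HnE. apply epsilon_spec, (Hst t Ht HnE eps Heps). }
  exists (fun t => if excluded_middle_informative (E t) then dE t else rr t). split.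
  { intros t Ht. destruct excluded_middle_informative as [HEt | HEt]; [auto | apply Hrr; auto]. }
  intros n x tg [Hx0 [Hxn [Hxt Hfine]]].
  assert (Hxm : forall k, (k < n)%nat -> x k <= x (S k)) by (intros k Hk; specialize (Hxt k Hk); lra).
  assert (Hx01 : forall k, (k <= n)%nat -> 0 <= x k <= 1).
  { intros k Hk. rewrite <- Hx0, <- Hxn. split; apply (nondecr_upto x n Hxm); lia. }
  set (wE := fun k => if excluded_middle_informative (E (tg k))
                      then (1 + Rabs (f (tg k))) * (x (S k) - x k) else 0).
  set (bE := fun k => if excluded_middle_informative (E (tg k)) then g (x (S k)) - g (x k) else 0).
  assert (HwEle : rsum wE n <= eta').
  { apply HwE; auto. intros k Hk HEt. specialize (Hfine k Hk).
    destruct excluded_middle_informative; [auto | tauto]. }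
  assert (HbE : rsum bE n < eps).
  { apply (Hsel n x (fun k => E (tg k))); auto. apply Rle_lt_trans with (rsum wE n); [| lra].
    apply rsum_le. intros k Hk. unfold wE. pose proof (Hxm k Hk). pose proof (Rabs_pos (f (tg k))).
    destruct excluded_middle_informative; nra. }
  assert (Hterm : forall k, (k < n)%nat -> g (x (S k)) - g (x k) <=
     f (tg k) * (x (S k) - x k) + eps * (x (S k) - x k) + bE k + wE k).
  { intros k Hk. unfold bE, wE. pose proof (Hxm k Hk). specialize (Hfine k Hk). specialize (Hxt k Hk).
    destruct excluded_middle_informative as [HEt | HEt].
    - pose proof (Rle_abs (- f (tg k))) as Habs. rewrite Rabs_Ropp in Habs.
      assert (0 <= (f (tg k) + eps + (1 + Rabs (f (tg k)))) * (x (S k) - x k)) by (apply Rmult_le_pos; lra).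
      lra.
    - pose proof (Hx01 k ltac:(lia)). pose proof (Hx01 (S k) ltac:(lia)).
      destruct (Hrr (tg k) ltac:(lra) HEt) as [_ Hs].
      assert (g (x (S k)) - g (x k) <= (f (tg k) + eps) * (x (S k) - x k)) by (apply Hs; lra).
      lra. }
  rewrite <- Hx0, <- Hxn, <- (rsum_telescope (fun k => g (x k))).
  eapply Rle_trans; [apply rsum_le, Hterm |].
  rewrite !rsum_plus, rsum_scal, rsum_telescope, Hx0, Hxn. lra.
Qed.

Lemma ftc_upper_bound (f g : R -> R) c (E : R -> Prop) :
  mcshane01 f c -> negligible E -> small_increments01 g -> straddle_dominated f g E ->
  g 1 - g 0 <= c.
Proof.
  intros Hmc HE Hac Hst.
  enough (Hmain : forall eps, 0 < eps -> g 1 - g 0 <= c + 4 * eps).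
  { destruct (Rle_lt_dec (g 1 - g 0) c) as [| Hlt]; auto.
    specialize (Hmain ((g 1 - g 0 - c) / 8) ltac:(lra)). lra. }
  intros eps Heps.
  destruct (Hmc eps Heps) as [d1 [Hd1 Hsum]].
  destruct (ftc_partition_bound f g E HE Hac Hst eps Heps) as [d2 [Hd2 Hpart]].
  destruct (cousin (fun t => Rmin (d1 t) (d2 t))) as [n [x [tg Hfp]]].
  { intros t Ht. specialize (Hd1 t Ht). specialize (Hd2 t Ht). apply Rmin_case; lra. }
  destruct Hfp as [Hx0 [Hxn [Hxt Hfine]]].
  assert (Hxm : forall k, (k < n)%nat -> x k <= x (S k)) by (intros k Hk; specialize (Hxt k Hk); lra).
  assert (HS : Rabs (rsum (fun k => f (tg k) * (x (S k) - x k)) n - c) < eps).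
  { apply Hsum; auto. intros k Hk.
    assert (0 <= x k /\ x (S k) <= 1)
      by (rewrite <- Hx0, <- Hxn; split; apply (nondecr_upto x n Hxm); clear Hxm; lia).
    specialize (Hfine k Hk). specialize (Hxt k Hk).
    pose proof (Rmin_l (d1 (tg k)) (d2 (tg k))). repeat split; lra. }
  assert (Hg : g 1 - g 0 <= rsum (fun k => f (tg k) * (x (S k) - x k)) n + 3 * eps).
  { apply Hpart. split; [auto | split; [auto | split; [auto |]]]. intros k Hk. specialize (Hfine k Hk).
    pose proof (Rmin_r (d1 (tg k)) (d2 (tg k))). lra. }
  apply Rabs_lt_iff in HS. lra.
Qed.

Lemma lipschitz_increment_error (G : R -> R) M ft u v : 0 <= M ->
  (forall u v, Rabs (G v - G u) <= M * Rabs (v - u)) -> Rabs ft <= M -> u <= v ->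
  Rabs (ft * (v - u) - (G v - G u)) <= 2 * M * (v - u).
Proof.
  intros HM HLip Hf Huv. eapply Rle_trans; [apply Rabs_triang |].
  rewrite Rabs_Ropp, Rabs_mult, (Rabs_pos_eq (v - u)) by lra.
  pose proof (HLip u v) as HL. rewrite (Rabs_pos_eq (v - u)) in HL by lra. nra.
Qed.

(* The integral of a piecewise constant [f] is the increment of a Lipschitz primitive [G]
   that is locally affine with slope [f] away from two break points; near the break points
   the gauge is the constant [eta], so their tags only see intervals inside
   [b - eta, b + eta]. *)
Lemma mcshane01_locally_affine (f G : R -> R) b1 b2 M : 0 <= M ->
  (forall u v, Rabs (G v - G u) <= M * Rabs (v - u)) ->
  (forall t, 0 <= t <= 1 -> t <> b1 -> t <> b2 -> exists r, 0 < r /\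
     forall u v, Rabs (u - t) < r -> Rabs (v - t) < r -> G v - G u = f t * (v - u)) ->
  Rabs (f b1) <= M -> Rabs (f b2) <= M -> mcshane01 f (G 1 - G 0).
Proof.
  intros HM HLip Hloc Hf1 Hf2 eps Heps.
  set (eta := eps / (8 * (M + 1))).
  assert (Heta : 0 < eta) by (unfold eta; apply Rdiv_lt_0_compat; lra).
  assert (Hsmall : 2 * M * (4 * eta) < eps).
  { assert (8 * (M + 1) * eta = eps) by (unfold eta; field; lra). nra. }
  set (affine_near := fun t r => 0 < r /\
    forall u v, Rabs (u - t) < r -> Rabs (v - t) < r -> G v - G u = f t * (v - u)).
  set (rr := fun t => epsilon (inhabits 1) (affine_near t)).
  assert (Hrr : forall t, 0 <= t <= 1 -> t <> b1 -> t <> b2 -> affine_near t (rr t))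
    by (intros t Ht H1 H2; apply epsilon_spec, Hloc; auto).
  exists (fun t => if excluded_middle_informative (t = b1 \/ t = b2) then eta else rr t). split.
  { intros t Ht. destruct excluded_middle_informative as [H | H]; auto.
    apply (Hrr t Ht); intros Hc; apply H; auto. }
  intros n x tg Hx0 Hxn Hmono Htag.
  set (T := fun b k => clamp (b - eta) (b + eta) (x (S k)) - clamp (b - eta) (b + eta) (x k)).
  assert (HT0 : forall b k, (k < n)%nat -> 0 <= T b k).
  { intros b k Hk. unfold T. pose proof (clamp_mono (b - eta) (b + eta) _ _ (Hmono k Hk)). lra. }
  assert (Hterm : forall k, (k < n)%nat ->
    Rabs (f (tg k) * (x (S k) - x k) - (G (x (S k)) - G (x k))) <= 2 * M * (T b1 k + T b2 k)).
  { intros k Hk. destruct (Htag k Hk) as [Htg [Hl Hr]]. pose proof (Hmono k Hk).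
    pose proof (HT0 b1 k Hk). pose proof (HT0 b2 k Hk).
    destruct excluded_middle_informative as [[Hb | Hb] | Hb].
    - assert (T b1 k = x (S k) - x k) by (unfold T; rewrite !clamp_id; lra).
      pose proof (lipschitz_increment_error G M (f (tg k)) (x k) (x (S k)) HM HLip ltac:(rewrite Hb; auto) ltac:(lra)).
      nra.
    - assert (T b2 k = x (S k) - x k) by (unfold T; rewrite !clamp_id; lra).
      pose proof (lipschitz_increment_error G M (f (tg k)) (x k) (x (S k)) HM HLip ltac:(rewrite Hb; auto) ltac:(lra)).
      nra.
    - destruct (Hrr (tg k) Htg) as [_ Heq]; [intros Hc; apply Hb; auto .. |].
      rewrite (Heq (x k) (x (S k))) by (apply Rabs_lt_iff; lra).
      rewrite Rminus_diag, Rabs_R0. nra. }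
  replace (G 1 - G 0) with (rsum (fun k => G (x (S k)) - G (x k)) n)
    by (rewrite (rsum_telescope (fun k => G (x k))), Hxn, Hx0; auto).
  rewrite <- rsum_minus. eapply Rle_lt_trans; [apply rsum_abs_le |].
  eapply Rle_lt_trans; [apply rsum_le, Hterm |].
  rewrite rsum_scal, rsum_plus.
  pose proof (rsum_clamp_increments (b1 - eta) (b1 + eta) x n ltac:(lra)).
  pose proof (rsum_clamp_increments (b2 - eta) (b2 + eta) x n ltac:(lra)). unfold T. nra.
Qed.

(** * Curves in the plane *)

Definition cont01 (X : R -> pt) : Prop :=
  forall t, 0 <= t <= 1 -> forall eps, 0 < eps -> exists d, 0 < d /\
    forall s, 0 <= s <= 1 -> Rabs (s - t) < d -> pnorm (psub (X s) (X t)) < eps.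

Lemma abs_cont01_cont01 X : abs_cont01 X -> cont01 X.
Proof.
  intros H t Ht eps Heps. destruct (H eps Heps) as [d [Hd Hf]]. exists d. split; auto.
  intros s Hs Hst. apply Rabs_lt_iff in Hst. destruct (Rle_dec t s).
  - specialize (Hf 1%nat (fun _ => t) (fun _ => s)). simpl in Hf.
    enough (0 + pnorm (psub (X s) (X t)) < eps) by lra.
    apply Hf; [intros; lra | intros; lia | lra].
  - specialize (Hf 1%nat (fun _ => s) (fun _ => t)). simpl in Hf. rewrite pnorm_psub_sym.
    enough (0 + pnorm (psub (X t) (X s)) < eps) by lra.
    apply Hf; [intros; split; lra | intros; lia | lra].
Qed.

Lemma cont01_reverse X : cont01 X -> cont01 (fun t => X (1 - t)).
Proof.
  intros H t Ht eps Heps. destruct (H (1 - t) ltac:(lra) eps Heps) as [d [Hd Hdd]].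
  exists d. split; auto. intros s Hs Hst. apply Hdd; [lra |].
  replace (1 - s - (1 - t)) with (- (s - t)) by ring. rewrite Rabs_Ropp. auto.
Qed.

(* Connectedness of [a, b]. *)
Lemma interval_clopen (a b : R) (P : R -> Prop) : a <= b -> P a ->
  (forall t, a <= t <= b -> P t ->
     exists r, 0 < r /\ forall s, a <= s <= b -> Rabs (s - t) < r -> P s) ->
  (forall t, a <= t <= b ->
     (forall r, 0 < r -> exists s, a <= s <= b /\ Rabs (s - t) < r /\ P s) -> P t) ->
  forall t, a <= t <= b -> P t.
Proof.
  intros Hab Pa Hopen Hclosed.
  set (E := fun s => a <= s <= b /\ forall u, a <= u <= s -> P u).
  assert (Ea : E a) by (split; [lra | intros u Hu; replace u with a by lra; auto]).
  assert (Hb : bound E) by (exists b; intros s [Hs _]; lra).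
  destruct (completeness E Hb (ex_intro _ a Ea)) as [sg [Hub Hlub]].
  assert (Hsa : a <= sg) by (apply Hub; auto).
  assert (Hsb : sg <= b) by (apply Hlub; intros s [Hs _]; lra).
  assert (Happ : forall r, 0 < r -> exists s, E s /\ sg - r < s /\ s <= sg).
  { intros r Hr. apply NNPP. intros Hn. assert (sg <= sg - r); [| lra]. apply Hlub. intros s Hs.
    destruct (Rle_lt_dec s (sg - r)); auto. exfalso; apply Hn. exists s.
    split; [auto | split; [lra | apply Hub; auto]]. }
  assert (Hbelow : forall u, a <= u < sg -> P u).
  { intros u Hu. destruct (Happ (sg - u) ltac:(lra)) as [s [[_ Hs] [Hs1 Hs2]]]. apply Hs. lra. }
  assert (Psg : P sg).
  { apply Hclosed; [lra |]. intros r Hr. destruct (Happ r Hr) as [s [[Hs1 Hs2] [Hs3 Hs4]]].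
    exists s. split; [lra | split; [apply Rabs_lt_iff; lra | apply Hs2; lra]]. }
  assert (Hsg : sg = b).
  { destruct (Req_dec sg b); auto. exfalso.
    destruct (Hopen sg ltac:(lra) Psg) as [r [Hr Hr2]].
    set (sg' := Rmin b (sg + r / 2)).
    assert (Hsg'b : sg' <= b) by apply Rmin_l.
    assert (Hsg'r : sg' <= sg + r / 2) by apply Rmin_r.
    assert (HE' : E sg').
    { split; [split; [unfold sg'; apply Rmin_case; lra | auto] |].
      intros u Hu. destruct (Rlt_le_dec u sg); [apply Hbelow; lra |].
      apply Hr2; [lra | apply Rabs_lt_iff; lra]. }
    assert (Hle : sg' <= sg) by (apply Hub; auto). revert Hle. unfold sg'. apply Rmin_case; lra. }
  intros t Ht. destruct (Req_dec t b) as [-> | Htb]; [rewrite <- Hsg; auto | apply Hbelow; lra].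
Qed.

Lemma last_zero_time (X : R -> pt) : cont01 X -> (exists t, 0 <= t <= 1 /\ X t = pzero) ->
  exists s, 0 <= s <= 1 /\ X s = pzero /\ forall t, s < t <= 1 -> X t <> pzero.
Proof.
  intros Hc [t0 [Ht0 HX0]].
  set (Z := fun s => 0 <= s <= 1 /\ X s = pzero).
  assert (Hb : bound Z) by (exists 1; intros s [Hs _]; lra).
  destruct (completeness Z Hb (ex_intro _ t0 (conj Ht0 HX0))) as [sg [Hub Hlub]].
  assert (Hs0 : t0 <= sg) by (apply Hub; split; auto).
  assert (Hs1 : sg <= 1) by (apply Hlub; intros s [Hs _]; lra).
  exists sg. split; [lra | split].
  - apply NNPP. intros Hn. assert (Hm : 0 < pnorm (X sg)).
    { destruct (Rle_lt_or_eq_dec 0 _ (pnorm_nonneg (X sg))); auto.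
      exfalso. apply Hn, pnorm_eq0. auto. }
    destruct (Hc sg ltac:(lra) _ Hm) as [d [Hd Hdd]].
    assert (Hnear : exists s, Z s /\ sg - d < s).
    { apply NNPP. intros Hn2. assert (sg <= sg - d); [| lra]. apply Hlub. intros s Hs.
      destruct (Rle_lt_dec s (sg - d)); auto. exfalso; apply Hn2; eauto. }
    destruct Hnear as [s [[Hs HXs] Hsd]]. assert (s <= sg) by (apply Hub; split; auto).
    specialize (Hdd s Hs ltac:(apply Rabs_lt_iff; lra)).
    rewrite HXs, pnorm_psub_sym, psub_zero_r in Hdd. lra.
  - intros t Ht HXt. assert (t <= sg) by (apply Hub; split; auto; lra). lra.
Qed.

Lemma first_zero_time (X : R -> pt) : cont01 X -> (exists t, 0 <= t <= 1 /\ X t = pzero) ->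
  exists s, 0 <= s <= 1 /\ X s = pzero /\ forall t, 0 <= t < s -> X t <> pzero.
Proof.
  intros Hc [t0 [Ht0 HX0]].
  destruct (last_zero_time (fun t => X (1 - t)) (cont01_reverse X Hc)) as [s [Hs [HXs Hafter]]].
  { exists (1 - t0). split; [lra |]. replace (1 - (1 - t0)) with t0 by ring. auto. }
  exists (1 - s). split; [lra | split; [auto |]]. intros t Ht.
  specialize (Hafter (1 - t) ltac:(lra)). replace (1 - (1 - t)) with t in Hafter by ring. auto.
Qed.

Definition controlled_on_pieces (g : R -> R) (X : R -> pt) (t1 t2 A B : R) : Prop :=
  forall u v, 0 <= u -> u <= v -> v <= 1 -> (v <= t1 \/ (t1 <= u /\ v <= t2) \/ t2 <= u) ->
    Rabs (g v - g u) <= A * (v - u) + B * pnorm (psub (X v) (X u)).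

Lemma nested_intervals n (a b a' b' : nat -> R) :
  (forall k, (k < n)%nat -> 0 <= a k /\ a k <= b k /\ b k <= 1) ->
  (forall k, (S k < n)%nat -> b k <= a (S k)) ->
  (forall k, (k < n)%nat -> a k <= a' k /\ a' k <= b' k /\ b' k <= b k) ->
  (forall k, (k < n)%nat -> 0 <= a' k /\ a' k <= b' k /\ b' k <= 1) /\
  (forall k, (S k < n)%nat -> b' k <= a' (S k)) /\
  rsum (fun k => b' k - a' k) n <= rsum (fun k => b k - a k) n.
Proof.
  intros Hab Hord Hsub. split; [| split].
  - intros k Hk. specialize (Hab k Hk). specialize (Hsub k Hk). lra.
  - intros k Hk. pose proof (Hsub k ltac:(lia)). pose proof (Hsub (S k) Hk). specialize (Hord k Hk). lra.
  - apply rsum_le. intros k Hk. specialize (Hsub k Hk). lra.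
Qed.

(* Cut every interval at [t1] and [t2]. *)
Lemma small_increments01_of_pieces g X t1 t2 A B : t1 <= t2 -> abs_cont01 X -> 0 <= A -> 0 <= B ->
  controlled_on_pieces g X t1 t2 A B -> small_increments01 g.
Proof.
  intros Ht HX HA HB Hp eps Heps.
  set (small := eps / (6 * (B + 1))).
  destruct (HX small ltac:(apply Rdiv_lt_0_compat; lra)) as [dX [HdX HXf]].
  exists (Rmin dX (eps / (2 * (A + 1)))). split; [apply Rmin_case; auto; apply Rdiv_lt_0_compat; lra |].
  intros n a b Hab Hord Hlen.
  assert (Hlen1 : rsum (fun k => b k - a k) n < dX) by (eapply Rlt_le_trans; [apply Hlen | apply Rmin_l]).
  assert (Hlen2 : rsum (fun k => b k - a k) n < eps / (2 * (A + 1)))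
    by (eapply Rlt_le_trans; [apply Hlen | apply Rmin_r]).
  set (c1 := fun k => Rmax (a k) (Rmin (b k) t1)).
  set (c2 := fun k => Rmax (c1 k) (Rmin (b k) t2)).
  assert (Hc : forall k, (k < n)%nat -> a k <= c1 k /\ c1 k <= c2 k /\ c2 k <= b k).
  { intros k Hk. destruct (Hab k Hk) as [? [? ?]]. unfold c2, c1, Rmax, Rmin. repeat destruct Rle_dec; lra. }
  assert (Hpc : forall u v, 0 <= u -> u <= v -> v <= 1 ->
      (u = v \/ v <= t1 \/ (t1 <= u /\ v <= t2) \/ t2 <= u) ->
      Rabs (g v - g u) <= A * (v - u) + B * pnorm (psub (X v) (X u))).
  { intros u v Hu Huv Hv [-> | Hor]; [| apply Hp; auto].
    rewrite Rminus_diag, Rabs_R0. pose proof (pnorm_nonneg (psub (X v) (X v))). nra. }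
  set (dX1 := fun k => pnorm (psub (X (c1 k)) (X (a k)))).
  set (dX2 := fun k => pnorm (psub (X (c2 k)) (X (c1 k)))).
  set (dX3 := fun k => pnorm (psub (X (b k)) (X (c2 k)))).
  assert (Hterm : forall k, (k < n)%nat -> g (b k) - g (a k) <= A * (b k - a k) + B * (dX1 k + dX2 k + dX3 k)).
  { intros k Hk. destruct (Hab k Hk) as [Ha [Hab' Hb]]. destruct (Hc k Hk) as [Hc1 [Hc12 Hc2]].
    assert (H1 : Rabs (g (c1 k) - g (a k)) <= A * (c1 k - a k) + B * dX1 k)
      by (apply Hpc; try lra; unfold c1, Rmax, Rmin; repeat destruct Rle_dec; lra).
    assert (H2 : Rabs (g (c2 k) - g (c1 k)) <= A * (c2 k - c1 k) + B * dX2 k)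
      by (apply Hpc; try lra; unfold c2, c1, Rmax, Rmin; repeat destruct Rle_dec; lra).
    assert (H3 : Rabs (g (b k) - g (c2 k)) <= A * (b k - c2 k) + B * dX3 k)
      by (apply Hpc; try lra; unfold c2, c1, Rmax, Rmin; repeat destruct Rle_dec; lra).
    apply Rabs_le_iff in H1, H2, H3. lra. }
  assert (F1 : rsum dX1 n < small).
  { destruct (nested_intervals n a b a c1 Hab Hord) as [? [? ?]];
      [intros k Hk; destruct (Hc k Hk); lra | apply HXf; auto; lra]. }
  assert (F2 : rsum dX2 n < small).
  { destruct (nested_intervals n a b c1 c2 Hab Hord) as [? [? ?]];
      [intros k Hk; destruct (Hc k Hk); lra | apply HXf; auto; lra]. }
  assert (F3 : rsum dX3 n < small).
  { destruct (nested_intervals n a b c2 b Hab Hord) as [? [? ?]];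
      [intros k Hk; destruct (Hc k Hk); lra | apply HXf; auto; lra]. }
  eapply Rle_lt_trans; [apply rsum_le, Hterm |].
  rewrite rsum_plus, !rsum_scal, !rsum_plus.
  assert (A * rsum (fun k => b k - a k) n <= A * (eps / (2 * (A + 1)))) by (apply Rmult_le_compat_l; lra).
  assert (2 * (A + 1) * (eps / (2 * (A + 1))) = eps) by (field; lra).
  assert (B * (rsum dX1 n + rsum dX2 n + rsum dX3 n) <= B * (3 * small)) by (apply Rmult_le_compat_l; lra).
  assert (6 * (B + 1) * small = eps) by (unfold small; field; lra).
  assert (0 < eps / (2 * (A + 1))) by (apply Rdiv_lt_0_compat; lra).
  assert (0 < small) by (unfold small; apply Rdiv_lt_0_compat; lra).
  nra.
Qed.

Lemma derivable_pt_lim_increment_bound h t d : derivable_pt_lim h t d ->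
  forall eps, 0 < eps -> exists r, 0 < r /\
  forall k, Rabs k < r -> Rabs (h (t + k) - h t - d * k) <= eps * Rabs k.
Proof.
  intros H eps Heps. destruct (H eps Heps) as [r Hr]. exists r. split; [apply cond_pos |].
  intros k Hk. destruct (Req_dec k 0) as [-> | Hk0].
  - replace (t + 0) with t by ring. replace (h t - h t - d * 0) with 0 by ring.
    rewrite !Rabs_R0. lra.
  - specialize (Hr k Hk0 Hk).
    replace (h (t + k) - h t - d * k) with (((h (t + k) - h t) / k - d) * k) by (field; auto).
    rewrite Rabs_mult. pose proof (Rabs_pos k). nra.
Qed.

Lemma derivable_pt_lim_straddle h t d : derivable_pt_lim h t d ->
  forall eps, 0 < eps -> exists r, 0 < r /\
  forall u v, u <= t -> t <= v -> t - r < u -> v < t + r -> h v - h u <= (d + eps) * (v - u).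
Proof.
  intros H eps Heps. destruct (derivable_pt_lim_increment_bound h t d H eps Heps) as [r [Hr Hb]].
  exists r. split; auto. intros u v Hu Hv Hu' Hv'.
  pose proof (Hb (v - t) ltac:(apply Rabs_lt_iff; lra)) as Hbv.
  pose proof (Hb (u - t) ltac:(apply Rabs_lt_iff; lra)) as Hbu.
  replace (t + (v - t)) with v in Hbv by ring. replace (t + (u - t)) with u in Hbu by ring.
  rewrite (Rabs_pos_eq (v - t)) in Hbv by lra. rewrite (Rabs_left1 (u - t)) in Hbu by lra.
  apply Rabs_le_iff in Hbv, Hbu. nra.
Qed.

Lemma straddle_of_local_derivative (g h : R -> R) t d ft C r0 :
  derivable_pt_lim h t d -> d <= ft -> 0 < r0 ->
  (forall s, 0 <= s <= 1 -> Rabs (s - t) < r0 -> g s = h s + C) ->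
  straddle_at ft g t.
Proof.
  intros Hd Hdf Hr0 Hg eps Heps. destruct (derivable_pt_lim_straddle h t d Hd eps Heps) as [r1 [Hr1 Hs]].
  exists (Rmin r0 r1). split; [apply Rmin_case; lra |]. intros u v Hu Hut Htv Hv Hu' Hv'.
  pose proof (Rmin_l r0 r1). pose proof (Rmin_r r0 r1).
  rewrite (Hg u), (Hg v); try (split; lra); try (apply Rabs_lt_iff; lra).
  specialize (Hs u v Hut Htv ltac:(lra) ltac:(lra)). nra.
Qed.

Lemma derivable_pt_lim_locally_affine F t l r : 0 < r ->
  (forall h, Rabs h < r -> F (t + h) = F t + l * h) -> derivable_pt_lim F t l.
Proof.
  intros Hr H eps Heps. exists (mkposreal r Hr). intros h Hh0 Hh. simpl in Hh.
  rewrite H by auto. replace ((F t + l * h - F t) / h - l) with 0 by (field; auto).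
  rewrite Rabs_R0. auto.
Qed.

Lemma has_deriv_locally_affine (X : R -> pt) t c0 c1 w r : 0 < r ->
  (forall s, Rabs (s - t) < r -> X s = scal (c0 + c1 * s) w) -> has_deriv X t (scal c1 w).
Proof.
  intros Hr H.
  assert (Hh : forall h, Rabs h < r -> X (t + h) = scal (c0 + c1 * t + c1 * h) w).
  { intros h Hh. rewrite H by (replace (t + h - t) with h by ring; auto). f_equal. ring. }
  assert (Ht : X t = scal (c0 + c1 * t) w) by (apply H; rewrite Rminus_diag, Rabs_R0; auto).
  split; apply (derivable_pt_lim_locally_affine _ _ _ r Hr); intros h Hh';
    rewrite Hh, Ht by auto; unfold scal; simpl; ring.
Qed.

Lemma derivable_pt_lim_affine_coord (X : R -> pt) t V (u : pt) a b : has_deriv X t V ->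
  derivable_pt_lim (fun s => a * s + b * dot (X s) u) t (a + b * dot V u).
Proof.
  intros [H1 H2]. unfold dot.
  replace (fun s => a * s + b * (fst (X s) * fst u + snd (X s) * snd u))
    with (fun s => a * s + ((b * fst u) * fst (X s) + (b * snd u) * snd (X s)))
    by (apply functional_extensionality; intros; ring).
  replace (a + b * (fst V * fst u + snd V * snd u))
    with (a * 1 + ((b * fst u) * fst V + (b * snd u) * snd V)) by ring.
  apply (derivable_pt_lim_plus (fun s => a * s)).
  - apply (derivable_pt_lim_scal id), derivable_pt_lim_id.
  - apply (derivable_pt_lim_plus (fun s => (b * fst u) * fst (X s)));
      apply derivable_pt_lim_scal; auto.
Qed.

Lemma abs_cont01_of_lipschitz (X : R -> pt) K : 0 <= K ->
  (forall u v, 0 <= u -> u <= v -> v <= 1 -> pnorm (psub (X v) (X u)) <= K * (v - u)) -> abs_cont01 X.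
Proof.
  intros HK HLip eps Heps. exists (eps / (K + 1)). split; [apply Rdiv_lt_0_compat; lra |].
  intros n a b Hab _ Hlen. apply Rle_lt_trans with (rsum (fun k => K * (b k - a k)) n).
  { apply rsum_le. intros k Hk. destruct (Hab k Hk) as [? [? ?]]. apply HLip; lra. }
  rewrite rsum_scal. apply Rle_lt_trans with (K * (eps / (K + 1))); [apply Rmult_le_compat_l; lra |].
  apply Rlt_le_trans with ((K + 1) * (eps / (K + 1))); [| right; field; lra].
  apply Rmult_lt_compat_r; [apply Rdiv_lt_0_compat |]; lra.
Qed.

Lemma pnorm_le_of_deriv_zero (X : R -> pt) t V : has_deriv X t V ->
  forall eps, 0 < eps -> exists r, 0 < r /\ forall s, Rabs (s - t) < r ->
  pnorm (psub (X s) (padd (X t) (scal (s - t) V))) <= 2 * eps * Rabs (s - t).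
Proof.
  intros [H1 H2] eps Heps.
  destruct (derivable_pt_lim_increment_bound _ _ _ H1 eps Heps) as [r1 [Hr1 Hb1]].
  destruct (derivable_pt_lim_increment_bound _ _ _ H2 eps Heps) as [r2 [Hr2 Hb2]].
  exists (Rmin r1 r2). split; [apply Rmin_case; lra |]. intros s Hs.
  pose proof (Rmin_l r1 r2). pose proof (Rmin_r r1 r2).
  specialize (Hb1 (s - t) ltac:(lra)). specialize (Hb2 (s - t) ltac:(lra)).
  replace (t + (s - t)) with s in Hb1, Hb2 by ring.
  eapply Rle_trans; [apply pnorm_le_abs_coords |]. unfold psub, padd, scal; simpl.
  replace (fst (X s) - (fst (X t) + (s - t) * fst V)) with (fst (X s) - fst (X t) - fst V * (s - t)) by ring.
  replace (snd (X s) - (snd (X t) + (s - t) * snd V)) with (snd (X s) - snd (X t) - snd V * (s - t)) by ring.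
  lra.
Qed.

(* Such times are isolated. *)
Lemma negligible_zero_crossings (X V : R -> pt) :
  negligible (fun t => X t = pzero /\ has_deriv X t (V t) /\ V t <> pzero).
Proof.
  apply negligible_isolated. intros t [Hz [Hd Hv]].
  set (m := pnorm (V t)).
  assert (Hm : 0 < m).
  { destruct (Rle_lt_or_eq_dec 0 _ (pnorm_nonneg (V t))); auto. exfalso; apply Hv, pnorm_eq0; auto. }
  destruct (pnorm_le_of_deriv_zero X t (V t) Hd (m / 8) ltac:(lra)) as [r [Hr Hb]].
  exists r. split; auto. intros s [Hzs _] Hst. apply NNPP. intros Hne.
  specialize (Hb s Hst). rewrite Hzs, Hz in Hb.
  replace (psub pzero (padd pzero (scal (s - t) (V t)))) with (scal (- (s - t)) (V t)) in Hb
    by (unfold psub, padd, scal, pzero; simpl; f_equal; ring).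
  rewrite pnorm_scal, Rabs_Ropp in Hb. fold m in Hb.
  assert (0 < Rabs (s - t)) by (apply Rabs_pos_lt; lra). nra.
Qed.

Lemma straddle_at_rest (g : R -> R) (P : pt -> R) (X : R -> pt) t l B C r0 :
  has_deriv X t pzero -> X t = pzero -> 0 <= B -> 0 < r0 ->
  (forall s, 0 <= s <= 1 -> Rabs (P (X s)) <= B * pnorm (X s)) ->
  (forall s, 0 <= s <= 1 -> Rabs (s - t) < r0 -> g s = C + l * s + P (X s)) ->
  straddle_at l g t.
Proof.
  intros Hd Hz HB Hr0 HP Hg eps Heps.
  set (ep := eps / (2 * (B + 1))).
  assert (Hep : 0 < ep) by (unfold ep; apply Rdiv_lt_0_compat; lra).
  assert (HBep : B * (2 * ep) <= eps).
  { apply Rle_trans with ((B + 1) * (2 * ep)); [nra |]. unfold ep. right. field. lra. }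
  destruct (pnorm_le_of_deriv_zero X t pzero Hd ep Hep) as [r1 [Hr1 Hb]].
  assert (Hsmall : forall s, Rabs (s - t) < r1 -> pnorm (X s) <= 2 * ep * Rabs (s - t)).
  { intros s Hs. specialize (Hb s Hs). rewrite Hz in Hb.
    replace (psub (X s) (padd pzero (scal (s - t) pzero))) with (X s) in Hb
      by (destruct (X s); unfold psub, padd, scal, pzero; simpl; f_equal; ring).
    auto. }
  exists (Rmin r0 r1). split; [apply Rmin_case; lra |].
  intros u v Hu Hut Htv Hv Hu' Hv'. pose proof (Rmin_l r0 r1). pose proof (Rmin_r r0 r1).
  rewrite (Hg u), (Hg v) by (lra || apply Rabs_lt_iff; lra).
  pose proof (Hsmall u ltac:(apply Rabs_lt_iff; lra)) as Hsu.
  pose proof (Hsmall v ltac:(apply Rabs_lt_iff; lra)) as Hsv.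
  rewrite (Rabs_left1 (u - t)) in Hsu by lra. rewrite (Rabs_pos_eq (v - t)) in Hsv by lra.
  pose proof (HP u ltac:(lra)) as HPu. pose proof (HP v ltac:(lra)) as HPv.
  apply Rabs_le_iff in HPu, HPv.
  assert (B * pnorm (X u) <= B * (2 * ep * - (u - t))) by (apply Rmult_le_compat_l; auto).
  assert (B * pnorm (X v) <= B * (2 * ep * (v - t))) by (apply Rmult_le_compat_l; auto).
  nra.
Qed.

(** * Convexity *)

Lemma C2_convex_supporting_line gamma f : 0 <= gamma -> C2_convex gamma f ->
  exists f1 : R -> R, forall p q, f q + f1 q * (p - q) <= f p.
Proof.
  intros Hg [f1 [f2 [H1 [H2 [_ H4]]]]]. exists f1.
  assert (Hmono : forall a b, a <= b -> f1 a <= f1 b).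
  { intros a b Hab. destruct (Req_dec a b) as [-> | Hne]; [lra |].
    destruct (MVT_cor2 f1 f2 a b ltac:(lra) (fun c _ => H2 c)) as [c [Hc _]].
    specialize (H4 c). nra. }
  intros p q. destruct (Rtotal_order p q) as [Hlt | [-> | Hgt]]; [| lra |].
  - destruct (MVT_cor2 f f1 p q Hlt (fun c _ => H1 c)) as [c [Hc Hc2]].
    pose proof (Hmono c q ltac:(lra)). nra.
  - destruct (MVT_cor2 f f1 q p Hgt (fun c _ => H1 c)) as [c [Hc Hc2]].
    pose proof (Hmono q c ltac:(lra)). nra.
Qed.

Definition tangent_slope (f : R -> R) : R -> R :=
  epsilon (inhabits (fun _ => 0)) (fun f1 => forall p q, f q + f1 q * (p - q) <= f p).

Lemma tangent_slope_spec gamma f : 0 <= gamma -> C2_convex gamma f ->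
  forall p q, f q + tangent_slope f q * (p - q) <= f p.
Proof.
  intros Hg Hc. apply (epsilon_spec (inhabits (fun _ => 0)) (fun f1 => forall p q, f q + f1 q * (p - q) <= f p)).
  eapply C2_convex_supporting_line; eauto.
Qed.

Lemma Lmin_le L n k p : (k <= n)%nat -> Lmin L n p <= L k p.
Proof.
  induction n; intros Hk; simpl; [replace k with O by lia; lra |].
  destruct (Nat.eq_dec k (S n)) as [-> | Hne]; [apply Rmin_r |].
  eapply Rle_trans; [apply Rmin_l | apply IHn; lia].
Qed.

Lemma L0_le N L k p : (k < N)%nat -> L0 N L p <= L k p.
Proof. intros. apply Lmin_le. lia. Qed.

Lemma uniform_positive_bound n (P : nat -> R -> Prop) :
  (forall k m m', 0 < m' <= m -> P k m -> P k m') ->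
  (forall k, (k < n)%nat -> exists m, 0 < m /\ P k m) ->
  exists m, 0 < m /\ forall k, (k < n)%nat -> P k m.
Proof.
  intros Hmono Hex. induction n as [| n IH].
  { exists 1. split; [lra | intros; lia]. }
  destruct IH as [m1 [Hm1 H1]]; [intros; apply Hex; lia |].
  destruct (Hex n ltac:(lia)) as [m2 [Hm2 H2]].
  exists (Rmin m1 m2). split; [apply Rmin_case; lra |].
  intros k Hk. pose proof (Rmin_l m1 m2). pose proof (Rmin_r m1 m2).
  destruct (Nat.eq_dec k n) as [-> | Hne].
  - apply (Hmono n m2); [split; [apply Rmin_case |]; lra | auto].
  - apply (Hmono k m1); [split; [apply Rmin_case |]; lra | apply H1; lia].
Qed.

(** * Geometry of the junction *)

Section Junction.

Variable N : nat.
Variable e : nat -> pt.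
Variable L : nat -> R -> R.
Variable gamma : R.
Hypothesis HN : (1 <= N)%nat.
Hypothesis He1 : forall i, (i < N)%nat -> pnorm (e i) = 1.
Hypothesis Hinj : forall i j, (i < N)%nat -> (j < N)%nat -> e i = e j -> i = j.

Lemma unit_dot i : (i < N)%nat -> dot (e i) (e i) = 1.
Proof. intros. rewrite <- pnorm_sq, He1 by auto. ring. Qed.

Lemma coord_scal i t : (i < N)%nat -> coord e i (scal t (e i)) = t.
Proof. intros. unfold coord. rewrite dot_scal_l, unit_dot by auto. ring. Qed.

Lemma coord_zero i : coord e i pzero = 0.
Proof. unfold coord, dot, pzero; simpl; ring. Qed.

Lemma scal_inj i a b : (i < N)%nat -> scal a (e i) = scal b (e i) -> a = b.
Proof. intros Hi H. rewrite <- (coord_scal i a), <- (coord_scal i b), H; auto. Qed.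

Lemma scal_e_zero i a : (i < N)%nat -> scal a (e i) = pzero -> a = 0.
Proof. intros Hi H. rewrite <- (scal_zero (e i)) in H. apply scal_inj in H; auto. Qed.

Lemma pnorm_psub_same_branch i a b : (i < N)%nat ->
  pnorm (psub (scal a (e i)) (scal b (e i))) = Rabs (a - b).
Proof.
  intros Hi. replace (psub (scal a (e i)) (scal b (e i))) with (scal (a - b) (e i))
    by (unfold scal, psub; simpl; f_equal; ring).
  rewrite pnorm_scal, He1 by auto. ring.
Qed.

Lemma dot_distinct_lt1 i k : (i < N)%nat -> (k < N)%nat -> i <> k -> dot (e i) (e k) < 1.
Proof.
  intros Hi Hk Hik. destruct (Rlt_le_dec (dot (e i) (e k)) 1) as [| Hge]; auto.
  exfalso. apply Hik, Hinj; auto. pose proof (unit_dot i Hi); pose proof (unit_dot k Hk).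
  assert (Hdiff : pnorm (psub (e i) (e k)) = 0).
  { apply Rle_antisym; [| apply pnorm_nonneg]. apply pnorm_le_of_sq; [lra |].
    replace (dot (psub (e i) (e k)) (psub (e i) (e k)))
      with (dot (e i) (e i) - 2 * dot (e i) (e k) + dot (e k) (e k)) by (unfold dot, psub; simpl; ring).
    lra. }
  apply pnorm_eq0 in Hdiff.
  destruct (e i) as [a b], (e k) as [c d]. unfold psub, pzero in Hdiff. simpl in Hdiff.
  inversion Hdiff. f_equal; lra.
Qed.

Lemma branch_dot_gap : exists kp, 0 < kp /\
  forall i k, (i < N)%nat -> (k < N)%nat -> i <> k -> dot (e i) (e k) <= 1 - kp.
Proof.
  destruct (uniform_positive_bound N
    (fun i kp => forall k, (k < N)%nat -> i <> k -> dot (e i) (e k) <= 1 - kp)) as [kp [Hkp H]].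
  { intros i m m' Hm H k Hk Hik. specialize (H k Hk Hik). lra. }
  2:{ exists kp. split; auto. }
  intros i Hi.
  apply (uniform_positive_bound N (fun k kp => i <> k -> dot (e i) (e k) <= 1 - kp)).
  { intros k m m' Hm H Hik. specialize (H Hik). lra. }
  intros k Hk. destruct (Nat.eq_dec i k) as [-> | Hik].
  - exists 1. split; [lra | tauto].
  - pose proof (dot_distinct_lt1 i k Hi Hk Hik). exists (1 - dot (e i) (e k)). split; intros; lra.
Qed.

(* Distinct branches meet at a positive angle. *)
Lemma branch_separation : exists c, 0 < c /\ forall i k a b, (i < N)%nat -> (k < N)%nat -> i <> k ->
  0 <= a -> 0 <= b -> c * (a + b) <= pnorm (psub (scal a (e i)) (scal b (e k))).
Proof.
  destruct branch_dot_gap as [kp [Hkp Hgap]].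
  exists (sqrt (kp / 2)). split; [apply sqrt_lt_R0; lra |].
  intros i k a b Hi Hk Hik Ha Hb.
  assert (Hcs : - 1 <= dot (e i) (e k)).
  { pose proof (cauchy_schwarz (e i) (e k)) as Hc. rewrite !He1 in Hc by auto.
    apply Rabs_le_iff in Hc. lra. }
  pose proof (Hgap i k Hi Hk Hik).
  apply pnorm_ge_of_sq; [apply Rmult_le_pos; [apply sqrt_pos | lra] |].
  replace (dot (psub (scal a (e i)) (scal b (e k))) (psub (scal a (e i)) (scal b (e k))))
    with (a * a * dot (e i) (e i) + b * b * dot (e k) (e k) - 2 * a * b * dot (e i) (e k))
    by (unfold dot, scal, psub; simpl; ring).
  rewrite !unit_dot by auto.
  replace (sqrt (kp / 2) * (a + b) * (sqrt (kp / 2) * (a + b)))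
    with (sqrt (kp / 2) * sqrt (kp / 2) * ((a + b) * (a + b))) by ring.
  rewrite sqrt_sqrt by lra.
  assert (0 <= a * b) by (apply Rmult_le_pos; auto).
  assert (0 <= (1 - kp / 2) * ((a - b) * (a - b))) by (apply Rmult_le_pos; [lra | apply Rle_0_sqr]).
  nra.
Qed.

Lemma inJstar_unique i k z : (i < N)%nat -> (k < N)%nat -> inJstar e i z -> inJstar e k z -> i = k.
Proof.
  intros Hi Hk [a [Ha ->]] [b [Hb Heq]]. destruct (Nat.eq_dec i k) as [| Hik]; auto. exfalso.
  destruct branch_separation as [c [Hc Hsep]].
  specialize (Hsep i k a b Hi Hk Hik ltac:(lra) ltac:(lra)).
  rewrite Heq in Hsep. replace (psub (scal b (e k)) (scal b (e k))) with pzero in Hsep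
    by (unfold psub, pzero; f_equal; ring).
  rewrite pnorm_zero in Hsep. nra.
Qed.

Lemma not_inJstar_zero i : (i < N)%nat -> ~ inJstar e i pzero.
Proof. intros Hi [a [Ha H]]. symmetry in H. apply scal_e_zero in H; auto. lra. Qed.

Lemma inJstar_open i a : (i < N)%nat -> 0 < a -> exists r, 0 < r /\
  forall w, inJ N e w -> pnorm (psub w (scal a (e i))) < r -> inJstar e i w.
Proof.
  intros Hi Ha. destruct branch_separation as [c [Hc Hsep]].
  exists (Rmin (c * a) a). split; [apply Rmin_case; nra |].
  intros w [k [Hk [b [Hb ->]]]] Hd. pose proof (Rmin_l (c * a) a). pose proof (Rmin_r (c * a) a).
  destruct (Nat.eq_dec k i) as [-> | Hki].
  - rewrite pnorm_psub_same_branch in Hd by auto. apply Rabs_lt_iff in Hd.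
    exists b. split; [lra | auto].
  - specialize (Hsep k i b a Hk Hi Hki Hb ltac:(lra)). nra.
Qed.

Lemma zero_inJ : inJ N e pzero.
Proof. exists O. split; [lia |]. exists 0. split; [lra | rewrite scal_zero; auto]. Qed.

Lemma inJ_cases z : inJ N e z -> z = pzero \/ exists i a, (i < N)%nat /\ 0 < a /\ z = scal a (e i).
Proof.
  intros [i [Hi [a [Ha ->]]]]. destruct (Req_dec a 0) as [-> | Ha0]; [left; apply scal_zero |].
  right. exists i, a. repeat split; auto. lra.
Qed.

Lemma inJi_of_pos i a k : (i < N)%nat -> (k < N)%nat -> 0 < a -> inJi e k (scal a (e i)) -> k = i.
Proof.
  intros Hi Hk Ha [b [Hb Heq]]. destruct (Req_dec b 0) as [-> | Hb0].
  - rewrite scal_zero in Heq. apply scal_e_zero in Heq; auto. lra.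
  - apply (inJstar_unique k i (scal a (e i))); auto; [exists b; split; auto; lra | exists a; auto].
Qed.

Definition branch_of (z : pt) : nat := epsilon (inhabits O) (fun k => (k < N)%nat /\ inJi e k z).

Lemma branch_of_inJstar i z : (i < N)%nat -> inJstar e i z -> branch_of z = i.
Proof.
  intros Hi Hz. destruct Hz as [a [Ha ->]].
  assert (Hex : exists k, (k < N)%nat /\ inJi e k (scal a (e i))) by (exists i; split; [auto | exists a; split; auto; lra]).
  destruct (epsilon_spec (inhabits O) _ Hex) as [Hb Hbi]. fold (branch_of (scal a (e i))) in Hb, Hbi.
  apply (inJi_of_pos i a); auto.
Qed.

Definition branch_potential (s : nat -> R) (z : pt) : R := s (branch_of z) * coord e (branch_of z) z.

Lemma branch_potential_scal s i a : (i < N)%nat -> 0 <= a -> branch_potential s (scal a (e i)) = s i * a.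
Proof.
  intros Hi Ha. unfold branch_potential. destruct (Req_dec a 0) as [-> | Ha0].
  - rewrite scal_zero, coord_zero. ring.
  - rewrite (branch_of_inJstar i), coord_scal; auto. exists a; split; auto; lra.
Qed.

Lemma branch_potential_zero s : branch_potential s pzero = 0.
Proof. unfold branch_potential. rewrite coord_zero. ring. Qed.

Lemma finite_abs_bound (s : nat -> R) n : exists B, 0 <= B /\ forall k, (k < n)%nat -> Rabs (s k) <= B.
Proof.
  induction n as [| m [B [HB H]]]; [exists 0; split; [lra | intros; lia] |].
  exists (Rmax B (Rabs (s m))). split; [eapply Rle_trans; [apply HB | apply Rmax_l] |].
  intros k Hk. destruct (Nat.eq_dec k m) as [-> | Hne]; [apply Rmax_r |].
  eapply Rle_trans; [apply H; lia | apply Rmax_l].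
Qed.

Lemma branch_potential_lipschitz s : exists B, 0 <= B /\ forall z w, inJ N e z -> inJ N e w ->
  Rabs (branch_potential s z - branch_potential s w) <= B * pnorm (psub z w).
Proof.
  destruct (finite_abs_bound s N) as [Sb [HS Hsb]]. destruct branch_separation as [c [Hc Hsep]].
  assert (Hinv : 0 < / c) by (apply Rinv_0_lt_compat; auto).
  exists (Sb * (1 + / c)). split; [nra |].
  intros z w [i [Hi [a [Ha ->]]]] [k [Hk [b [Hb ->]]]]. rewrite !branch_potential_scal by auto.
  pose proof (pnorm_nonneg (psub (scal a (e i)) (scal b (e k)))).
  destruct (Nat.eq_dec i k) as [<- | Hik].
  - rewrite pnorm_psub_same_branch by auto.
    replace (s i * a - s i * b) with (s i * (a - b)) by ring. rewrite Rabs_mult.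
    specialize (Hsb i Hi). pose proof (Rabs_pos (a - b)).
    assert (0 <= Sb * / c * Rabs (a - b)) by (apply Rmult_le_pos; nra).
    apply Rle_trans with (Sb * Rabs (a - b)); [apply Rmult_le_compat_r |]; nra.
  - specialize (Hsep i k a b Hi Hk Hik Ha Hb).
    apply Rle_trans with (Sb * (a + b)).
    + eapply Rle_trans; [apply Rabs_triang |].
      rewrite Rabs_Ropp, !Rabs_mult, (Rabs_pos_eq a), (Rabs_pos_eq b) by auto.
      pose proof (Hsb i Hi). pose proof (Hsb k Hk). nra.
    + apply Rle_trans with (Sb * / c * (c * (a + b))).
      * right. field. lra.
      * assert (0 <= Sb * pnorm (psub (scal a (e i)) (scal b (e k)))) by nra.
        apply Rle_trans with (Sb * / c * pnorm (psub (scal a (e i)) (scal b (e k)))); [| lra].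
        apply Rmult_le_compat_l; [nra | auto].
Qed.

Lemma E1_scal j a tau : (j < N)%nat -> 0 < a -> tau <> 0 ->
  Defs.E1 N e L tau (scal a (e j)) = Fin (tau * L j (- a / tau) - tau * L0 N L 0).
Proof.
  intros Hj Ha Ht. apply the_Rbar_eq.
  - left. exists j. repeat split; auto; [exists a; split; auto |]. rewrite coord_scal; auto.
  - intros w [[j' [Hj' [Hs [_ ->]]]] | [[Hz _] | [Hz _]]].
    + assert (j' = j) by (apply (inJstar_unique j' j (scal a (e j))); auto; exists a; split; auto).
      subst j'. rewrite coord_scal; auto.
    + apply scal_e_zero in Hz; auto. lra.
    + lra.
Qed.

Lemma E1_zero tau : Defs.E1 N e L tau pzero = Fin 0.
Proof.
  apply the_Rbar_eq; [right; left; auto |].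
  intros w [[j' [Hj' [Hs _]]] | [[_ ->] | [_ [Hz _]]]]; auto.
  - exfalso; apply (not_inJstar_zero j'); auto.
  - tauto.
Qed.

Lemma E1_at_0 y : y <> pzero -> Defs.E1 N e L 0 y = PInf.
Proof.
  intros Hy. apply the_Rbar_eq; [right; right; auto |].
  intros w [[j' [_ [_ [H _]]]] | [[Hz _] | [_ [_ ->]]]]; auto; tauto.
Qed.

Lemma E2_scal i a tau : (i < N)%nat -> 0 < a -> tau <> 1 ->
  Defs.E2 N e L tau (scal a (e i)) = Fin ((1 - tau) * L i (a / (1 - tau)) + tau * L0 N L 0).
Proof.
  intros Hi Ha Ht. apply the_Rbar_eq.
  - left. exists i. repeat split; auto; [exists a; split; auto |]. rewrite coord_scal; auto.
  - intros w [[j' [Hj' [Hs [_ ->]]]] | [[Hz _] | [Hz _]]].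
    + assert (j' = i) by (apply (inJstar_unique j' i (scal a (e i))); auto; exists a; split; auto).
      subst j'. rewrite coord_scal; auto.
    + apply scal_e_zero in Hz; auto. lra.
    + lra.
Qed.

Lemma E2_zero tau : Defs.E2 N e L tau pzero = Fin (L0 N L 0).
Proof.
  apply the_Rbar_eq; [right; left; auto |].
  intros w [[j' [Hj' [Hs _]]] | [[_ ->] | [_ [Hz _]]]]; auto.
  - exfalso; apply (not_inJstar_zero j'); auto.
  - tauto.
Qed.

Lemma E2_at_1 x : x <> pzero -> Defs.E2 N e L 1 x = PInf.
Proof.
  intros Hx. apply the_Rbar_eq; [right; right; auto |].
  intros w [[j' [_ [_ [H _]]]] | [[Hz _] | [_ [_ ->]]]]; auto; tauto.
Qed.

(* When [a] (resp. [b]) vanishes, [tau] is forced to [0] (resp. [1]) and the slope is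
   Rocq's junk quotient by zero, which is irrelevant since it is multiplied by [0]. *)
Lemma E1_scal_nonneg j a tau : (j < N)%nat -> 0 <= a -> (a = 0 -> tau = 0) -> (0 < a -> tau <> 0) ->
  Defs.E1 N e L tau (scal a (e j)) = Fin (tau * L j (- a / tau) - tau * L0 N L 0).
Proof.
  intros Hj Ha H0 H1. destruct (Req_dec a 0) as [Ha0 | Ha0].
  - rewrite Ha0, scal_zero, (H0 Ha0), E1_zero. f_equal. ring.
  - apply E1_scal; auto; [lra | apply H1; lra].
Qed.

Lemma E2_scal_nonneg i b tau : (i < N)%nat -> 0 <= b -> (b = 0 -> tau = 1) -> (0 < b -> tau <> 1) ->
  Defs.E2 N e L tau (scal b (e i)) = Fin ((1 - tau) * L i (b / (1 - tau)) + tau * L0 N L 0).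
Proof.
  intros Hi Hb H0 H1. destruct (Req_dec b 0) as [Hb0 | Hb0].
  - rewrite Hb0, scal_zero, (H0 Hb0), E2_zero. f_equal. ring.
  - apply E2_scal; auto; [lra | apply H1; lra].
Qed.

Lemma Dstraight_same_branch i a b : (i < N)%nat -> 0 <= a -> 0 <= b -> ~ (a = 0 /\ b = 0) ->
  Dstraight N e L (scal a (e i)) (scal b (e i)) = Fin (L i (b - a)).
Proof.
  intros Hi Ha Hb Hab. apply the_Rbar_eq.
  - left. exists i. split; [auto |]. split; [exists a; split; auto |].
    split; [exists b; split; auto |]. split.
    + intros [H1 H2]. apply Hab. split; eapply scal_e_zero; eauto.
    + rewrite !coord_scal; auto.
  - assert (Hnab : 0 < a \/ 0 < b) by lra.
    intros w [[i' [Hi' [Hy [Hx [_ ->]]]]] | [[H1 [H2 _]] | [Hn _]]].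
    + assert (i' = i) by (destruct Hnab; [apply (inJi_of_pos i a i') | apply (inJi_of_pos i b i')]; auto).
      subst i'. rewrite !coord_scal; auto.
    + exfalso; apply Hab. split; eapply scal_e_zero; eauto.
    + exfalso. apply Hn. exists i. split; [auto |]. split; [exists a | exists b]; split; auto.
Qed.

Lemma Dstraight_zero : Dstraight N e L pzero pzero = Fin (L0 N L 0).
Proof.
  apply the_Rbar_eq; [right; left; auto |].
  intros w [[i' [Hi' [_ [_ [H _]]]]] | [[_ [_ ->]] | [Hn _]]]; auto; [tauto |].
  exfalso; apply Hn. exists O. split; [lia |].
  split; exists 0; split; try lra; rewrite scal_zero; auto.
Qed.

Lemma Dstraight_distinct_branches i k a b : (i < N)%nat -> (k < N)%nat -> i <> k -> 0 < a -> 0 < b ->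
  Dstraight N e L (scal a (e i)) (scal b (e k)) = PInf.
Proof.
  intros Hi Hk Hik Ha Hb. apply the_Rbar_eq.
  - right; right. split; auto. intros [m [Hm [Hy Hx]]]. apply Hik.
    apply (inJi_of_pos i a m) in Hy; apply (inJi_of_pos k b m) in Hx; auto. lia.
  - intros w [[i' [Hi' [Hy [Hx _]]]] | [[H1 _] | [_ ->]]]; auto.
    + exfalso. apply Hik. apply (inJi_of_pos i a i') in Hy; apply (inJi_of_pos k b i') in Hx; auto. lia.
    + exfalso. apply scal_e_zero in H1; auto. lra.
Qed.

(** * Lower bound *)

Hypothesis Hgamma : 0 < gamma.
Hypothesis HL : forall i, (i < N)%nat -> C2_convex gamma (L i).

Lemma L_tangent i p q : (i < N)%nat -> L i q + tangent_slope (L i) q * (p - q) <= L i p.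
Proof. intros. apply (tangent_slope_spec gamma); [lra | auto]. Qed.

Definition regular (X V : R -> pt) (f : R -> R) (t : R) : Prop :=
  (has_deriv X t (V t) /\ Aset N e (X t) (V t)) /\ Lrel N e L (X t) (V t) (f t).

Lemma regular_on_branch X V f t k : regular X V f t -> (k < N)%nat -> inJstar e k (X t) ->
  exists p, V t = scal p (e k) /\ f t = L k p.
Proof.
  intros [_ [[i [Hi [Hsi [p [HV Hf]]]]] | [Hz _]]] Hk Hs.
  - assert (i = k) by (apply (inJstar_unique i k (X t)); auto). subst. eauto.
  - exfalso. apply (not_inJstar_zero k Hk). rewrite <- Hz. auto.
Qed.

Lemma regular_at_rest X V f t : regular X V f t -> X t = pzero -> V t = pzero -> f t = L0 N L 0.
Proof.
  intros [_ [[i [Hi [Hsi _]]] | [_ [i [Hi [p [Hp [HV Hf]]]]]]]] Hz Hv.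
  - exfalso. apply (not_inJstar_zero i Hi). rewrite <- Hz. auto.
  - rewrite Hv in HV. symmetry in HV. apply scal_e_zero in HV; auto. subst. auto.
Qed.

Lemma regular_on_branch_intro X V f t k a p : (k < N)%nat -> 0 < a -> X t = scal a (e k) ->
  has_deriv X t (scal p (e k)) -> V t = scal p (e k) -> f t = L k p -> regular X V f t.
Proof.
  intros Hk Ha HX Hd HV Hf. unfold regular. rewrite HV, Hf in *.
  assert (Hs : inJstar e k (X t)) by (exists a; auto).
  split; [split; [auto | left; exists k; split; [| split]; eauto] |].
  left. exists k. split; [| split]; eauto.
Qed.

Lemma regular_at_rest_intro X V f t : X t = pzero -> has_deriv X t pzero -> V t = pzero ->
  f t = L0 N L 0 -> regular X V f t.
Proof.
  intros HX Hd HV Hf. unfold regular. rewrite HV, HX, Hf in *.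
  assert (Hz : pzero = scal 0 (e O)) by (rewrite scal_zero; auto).
  split; [split; [auto | right; split; [auto |]] |]; [| right; split; [auto |]];
    exists O; split; try lia; exists 0; repeat split; auto; lra.
Qed.

Lemma stays_on_branch (X : R -> pt) k a b : (forall t, 0 <= t <= 1 -> inJ N e (X t)) -> cont01 X ->
  0 <= a -> a <= b -> b <= 1 -> (forall t, a <= t <= b -> X t <> pzero) -> (k < N)%nat ->
  inJstar e k (X a) -> forall t, a <= t <= b -> inJstar e k (X t).
Proof.
  intros HJ Hc Ha Hab Hb Hnz Hk Hka.
  assert (Hloc : forall m t, (m < N)%nat -> 0 <= t <= 1 -> inJstar e m (X t) ->
    exists r, 0 < r /\ forall s, 0 <= s <= 1 -> Rabs (s - t) < r -> inJstar e m (X s)).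
  { intros m t Hm Ht [a' [Ha' HXt]]. destruct (inJstar_open m a' Hm Ha') as [r0 [Hr0 Hopen]].
    destruct (Hc t Ht r0 Hr0) as [d [Hd Hdd]]. exists d. split; auto.
    intros s Hs Hst. apply Hopen; [apply HJ; auto | rewrite <- HXt; apply Hdd; auto]. }
  apply (interval_clopen a b (fun t => inJstar e k (X t))); auto.
  - intros t Ht Hkt. destruct (Hloc k t Hk ltac:(lra) Hkt) as [r [Hr Hrr]].
    exists r. split; auto. intros s Hs Hst. apply Hrr; auto. lra.
  - intros t Ht Happ. destruct (inJ_cases (X t) (HJ t ltac:(lra))) as [Hz | [m [a' [Hm [Ha' HXt]]]]].
    + exfalso. apply (Hnz t Ht Hz).
    + assert (Hmt : inJstar e m (X t)) by (exists a'; split; auto).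
      destruct (Hloc m t Hm ltac:(lra) Hmt) as [r [Hr Hrr]].
      destruct (Happ r Hr) as [s [Hs [Hst Hks]]].
      assert (inJstar e m (X s)) by (apply Hrr; auto; lra).
      assert (k = m) by (apply (inJstar_unique k m (X s)); auto). subst. auto.
Qed.

Lemma affine_coord_increment_le (X : R -> pt) A s k u v : (k < N)%nat -> u <= v ->
  Rabs ((A * v + s * coord e k (X v)) - (A * u + s * coord e k (X u)))
  <= Rabs A * (v - u) + Rabs s * pnorm (psub (X v) (X u)).
Proof.
  intros Hk Huv.
  replace ((A * v + s * coord e k (X v)) - (A * u + s * coord e k (X u)))
    with (A * (v - u) + s * dot (psub (X v) (X u)) (e k)) by (unfold coord, dot, psub; simpl; ring).
  eapply Rle_trans; [apply Rabs_triang |]. rewrite !Rabs_mult, (Rabs_pos_eq (v - u)) by lra.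
  pose proof (cauchy_schwarz (psub (X v) (X u)) (e k)) as Hcs. rewrite He1, Rmult_1_r in Hcs by auto.
  apply Rplus_le_compat_l, Rmult_le_compat_l; [apply Rabs_pos | auto].
Qed.

(* Along a curve that stays on the branch [J_i], the calibration is the supporting line
   of [L_i] at the mean speed [b - a]. *)
Lemma lower_bound_avoiding_junction (X V : R -> pt) f c y x :
  (forall t, 0 <= t <= 1 -> inJ N e (X t)) -> abs_cont01 X -> X 0 = y -> X 1 = x ->
  ae01 (regular X V f) -> mcshane01 f c -> (forall t, 0 <= t <= 1 -> X t <> pzero) ->
  Rbar_le (Dstraight N e L y x) (Fin c).
Proof.
  intros HJ HAC HX0 HX1 Hreg Hmc Hnz. pose proof (abs_cont01_cont01 X HAC) as Hc.
  destruct (inJ_cases (X 0) (HJ 0 ltac:(lra))) as [Hz | [i [a [Hi [Ha Hy]]]]].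
  { exfalso. apply (Hnz 0); auto. lra. }
  assert (Hbr : forall t, 0 <= t <= 1 -> inJstar e i (X t))
    by (apply (stays_on_branch X i 0 1); auto; try lra; exists a; split; auto).
  destruct (Hbr 1 ltac:(lra)) as [b [Hb Hx]].
  rewrite <- HX0, <- HX1, Hy, Hx, Dstraight_same_branch by (auto; lra). simpl.
  set (s := tangent_slope (L i) (b - a)). set (A := L i (b - a) - s * (b - a)).
  set (g := fun t => A * t + s * coord e i (X t)).
  replace (L i (b - a)) with (g 1 - g 0) by (unfold g; rewrite Hx, Hy, !coord_scal by auto; unfold A; ring).
  apply (ftc_upper_bound f g c (fun t => 0 <= t <= 1 /\ ~ regular X V f t)); auto.
  - apply (small_increments01_of_pieces g X 1 1 (Rabs A) (Rabs s)); auto; try lra; try apply Rabs_pos.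
    intros u v Hu Huv Hv _. apply affine_coord_increment_le; auto.
  - intros t Ht HnE. assert (Hrt : regular X V f t) by (apply NNPP; intros Hn; apply HnE; auto).
    destruct (regular_on_branch X V f t i Hrt Hi (Hbr t Ht)) as [p [HV Hf]].
    apply (straddle_of_local_derivative g g t (A + s * coord e i (V t)) (f t) 0 1); try lra.
    + apply derivable_pt_lim_affine_coord, Hrt.
    + rewrite HV, coord_scal, Hf by auto. pose proof (L_tangent i p (b - a) Hi) as Htan.
      fold s in Htan. unfold A. lra.
    + intros; ring.
Qed.

Section JunctionVisit.

Variables (X V : R -> pt) (t1 t2 a b : R) (j i : nat).
Hypothesis HXJ : forall t, 0 <= t <= 1 -> inJ N e (X t).
Hypothesis HXac : abs_cont01 X.
Hypothesis Hj : (j < N)%nat.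
Hypothesis Hi : (i < N)%nat.
Hypothesis Ha : 0 <= a.
Hypothesis Hb : 0 <= b.
Hypothesis HX0 : X 0 = scal a (e j).
Hypothesis HX1 : X 1 = scal b (e i).
Hypothesis Ht1 : 0 <= t1.
Hypothesis Ht12 : t1 <= t2.
Hypothesis Ht2 : t2 <= 1.
Hypothesis HXt1 : X t1 = pzero.
Hypothesis HXt2 : X t2 = pzero.
Hypothesis Hbefore : forall t, 0 <= t < t1 -> X t <> pzero.
Hypothesis Hafter : forall t, t2 < t <= 1 -> X t <> pzero.

(* The calibration uses the supporting lines of [L_j] at the entry speed [-a/t1], of
   every [L_k] at rest, and of [L_i] at the exit speed [b/(1-t2)]; it is continuous
   because [X] sits at the origin at [t1] and [t2]. *)
Let q1 := - a / t1.
Let q3 := b / (1 - t2).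
Let s1 := tangent_slope (L j) q1.
Let s3 := tangent_slope (L i) q3.
Let s0 := fun k => tangent_slope (L k) 0.
Let l0 := L0 N L 0.
Let G1 (t : R) : R := (L j q1 - s1 * q1) * t + s1 * coord e j (X t).
Let G2 (t : R) : R := G1 t1 + l0 * (t - t1) + branch_potential s0 (X t).
Let G3 (t : R) : R := G2 t2 + (L i q3 - s3 * q3) * (t - t2) + s3 * coord e i (X t).
Let calibration (t : R) : R := if Rle_dec t t1 then G1 t else if Rle_dec t t2 then G2 t else G3 t.

Lemma entry_speed_mul : q1 * t1 = - a.
Proof.
  unfold q1. destruct (Req_dec t1 0) as [H0 | H0]; [| field; auto].
  rewrite H0 in HXt1. rewrite HX0 in HXt1. rewrite H0, (scal_e_zero j a Hj HXt1). unfold Rdiv. ring.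
Qed.

Lemma exit_speed_mul : q3 * (1 - t2) = b.
Proof.
  unfold q3. destruct (Req_dec t2 1) as [H1 | H1]; [| field; lra].
  rewrite H1 in HXt2. rewrite HX1 in HXt2. rewrite H1, (scal_e_zero i b Hi HXt2). unfold Rdiv. ring.
Qed.

Lemma calibration_before t : t <= t1 -> calibration t = G1 t.
Proof. intros Ht. unfold calibration. destruct Rle_dec; [auto | lra]. Qed.

Lemma calibration_between t : t1 <= t <= t2 -> calibration t = G2 t.
Proof.
  intros Ht. unfold calibration. destruct Rle_dec; [| destruct Rle_dec; [auto | lra]].
  replace t with t1 by lra. unfold G2. rewrite HXt1, branch_potential_zero. ring.
Qed.

Lemma calibration_after t : t2 <= t -> calibration t = G3 t.
Proof.
  intros Ht. assert (HG3 : G3 t2 = G2 t2) by (unfold G3; rewrite HXt2, coord_zero; ring).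
  unfold calibration. destruct Rle_dec as [| Hn1]; [| destruct Rle_dec; [| auto]].
  - replace t with t1 by lra. replace t2 with t1 in HG3 by lra. rewrite HG3.
    unfold G2. rewrite HXt1, branch_potential_zero. ring.
  - replace t with t2 by lra. auto.
Qed.

Lemma calibration_increment :
  calibration 1 - calibration 0 = t1 * L j q1 + l0 * (t2 - t1) + (1 - t2) * L i q3.
Proof.
  rewrite calibration_after, calibration_before by lra.
  unfold G3, G2, G1. rewrite HXt1, HXt2, HX1, HX0, branch_potential_zero, coord_zero, !coord_scal by auto.
  replace ((L i q3 - s3 * q3) * (1 - t2)) with (L i q3 * (1 - t2) - s3 * (q3 * (1 - t2))) by ring.
  replace ((L j q1 - s1 * q1) * t1) with (L j q1 * t1 - s1 * (q1 * t1)) by ring.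
  rewrite entry_speed_mul, exit_speed_mul. ring.
Qed.

Lemma calibration_small_increments : small_increments01 calibration.
Proof.
  destruct (branch_potential_lipschitz s0) as [Bp [HBp HBpl]].
  set (A1 := L j q1 - s1 * q1). set (A3 := L i q3 - s3 * q3).
  pose proof (Rabs_pos A1); pose proof (Rabs_pos l0); pose proof (Rabs_pos A3);
  pose proof (Rabs_pos s1); pose proof (Rabs_pos s3).
  apply (small_increments01_of_pieces calibration X t1 t2 (Rabs A1 + Rabs l0 + Rabs A3) (Rabs s1 + Bp + Rabs s3));
    auto; try lra.
  intros u v Hu Huv Hv Hcase. pose proof (pnorm_nonneg (psub (X v) (X u))).
  destruct Hcase as [Hc1 | [Hc2 | Hc3]].
  - rewrite !calibration_before by lra.
    eapply Rle_trans; [apply (affine_coord_increment_le X A1 s1 j u v Hj Huv) | nra].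
  - rewrite !calibration_between by lra. unfold G2.
    replace (G1 t1 + l0 * (v - t1) + branch_potential s0 (X v) - (G1 t1 + l0 * (u - t1) + branch_potential s0 (X u)))
      with (l0 * (v - u) + (branch_potential s0 (X v) - branch_potential s0 (X u))) by ring.
    eapply Rle_trans; [apply Rabs_triang |]. rewrite Rabs_mult, (Rabs_pos_eq (v - u)) by lra.
    pose proof (HBpl (X v) (X u) (HXJ v ltac:(lra)) (HXJ u ltac:(lra))). nra.
  - rewrite !calibration_after by lra. unfold G3. fold A3.
    replace (G2 t2 + A3 * (v - t2) + s3 * coord e i (X v) - (G2 t2 + A3 * (u - t2) + s3 * coord e i (X u)))
      with ((A3 * v + s3 * coord e i (X v)) - (A3 * u + s3 * coord e i (X u))) by ring.
    eapply Rle_trans; [apply (affine_coord_increment_le X A3 s3 i u v Hi Huv) | nra].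
Qed.

Lemma calibration_straddle_before f t : 0 <= t < t1 -> regular X V f t ->
  straddle_at (f t) calibration t.
Proof.
  intros Ht Hrt. pose proof (abs_cont01_cont01 X HXac) as Hc.
  assert (Hapos : 0 < a).
  { destruct (Req_dec a 0) as [H0 | H0]; [| lra]. exfalso. apply (Hbefore 0); [lra |].
    rewrite HX0, H0. apply scal_zero. }
  assert (Hbr : inJstar e j (X t)).
  { apply (stays_on_branch X j 0 t); auto; try lra.
    - intros s Hs. apply Hbefore. lra.
    - rewrite HX0. exists a. split; auto. }
  destruct (regular_on_branch X V f t j Hrt Hj Hbr) as [p [HV Hf]].
  apply (straddle_of_local_derivative calibration G1 t ((L j q1 - s1 * q1) + s1 * coord e j (V t)) (f t) 0 (t1 - t));
    try lra.
  - apply derivable_pt_lim_affine_coord, Hrt.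
  - rewrite HV, coord_scal, Hf by auto. pose proof (L_tangent j p q1 Hj) as Htan. fold s1 in Htan. lra.
  - intros s Hs Hst. apply Rabs_lt_iff in Hst. rewrite calibration_before by lra. ring.
Qed.

Lemma calibration_straddle_between f t : t1 < t < t2 -> regular X V f t ->
  ~ (X t = pzero /\ V t <> pzero) -> straddle_at (f t) calibration t.
Proof.
  intros Ht Hrt Hcross. pose proof (abs_cont01_cont01 X HXac) as Hc.
  set (r0 := Rmin (t - t1) (t2 - t)).
  assert (Hr0 : 0 < r0) by (unfold r0; apply Rmin_case; lra).
  assert (Hnear : forall s, Rabs (s - t) < r0 -> t1 <= s <= t2).
  { intros s Hs. pose proof (Rmin_l (t - t1) (t2 - t)). pose proof (Rmin_r (t - t1) (t2 - t)).
    apply Rabs_lt_iff in Hs. unfold r0 in Hs. lra. }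
  destruct (inJ_cases (X t) (HXJ t ltac:(lra))) as [Hz | [k [a' [Hk [Ha' HXt]]]]].
  - assert (HVz : V t = pzero) by (apply NNPP; intros Hn; apply Hcross; auto).
    rewrite (regular_at_rest X V f t Hrt Hz HVz).
    destruct (branch_potential_lipschitz s0) as [Bp [HBp HBpl]].
    apply (straddle_at_rest calibration (branch_potential s0) X t l0 Bp (G1 t1 - l0 * t1) r0); auto.
    + rewrite <- HVz. apply Hrt.
    + intros s Hs. pose proof (HBpl (X s) pzero (HXJ s Hs) zero_inJ) as Hs0.
      rewrite branch_potential_zero, psub_zero_r, Rminus_0_r in Hs0. auto.
    + intros s Hs Hst. rewrite calibration_between by (apply Hnear; auto). unfold G2. ring.
  - assert (Hst : inJstar e k (X t)) by (exists a'; split; auto).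
    destruct (regular_on_branch X V f t k Hrt Hk Hst) as [p [HV Hf]].
    destruct (inJstar_open k a' Hk Ha') as [r1 [Hr1 Hopen]].
    destruct (Hc t ltac:(lra) r1 Hr1) as [d [Hd Hdd]].
    apply (straddle_of_local_derivative calibration (fun s => l0 * s + s0 k * coord e k (X s)) t
      (l0 + s0 k * coord e k (V t)) (f t) (G1 t1 - l0 * t1) (Rmin d r0)).
    + apply derivable_pt_lim_affine_coord, Hrt.
    + rewrite HV, coord_scal, Hf by auto.
      pose proof (L_tangent k p 0 Hk). pose proof (L0_le N L k 0 Hk). unfold s0, l0. lra.
    + apply Rmin_case; lra.
    + intros s Hs Hsr. pose proof (Rmin_l d r0). pose proof (Rmin_r d r0).
      assert (Hks : inJstar e k (X s)).
      { apply Hopen; [apply HXJ; auto |]. rewrite <- HXt. apply Hdd; auto. lra. }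
      destruct Hks as [b' [Hb' HXs]].
      rewrite calibration_between by (apply Hnear; lra). unfold G2.
      rewrite HXs, branch_potential_scal, coord_scal by (auto; lra). ring.
Qed.

Lemma calibration_straddle_after f t : t2 < t <= 1 -> regular X V f t ->
  straddle_at (f t) calibration t.
Proof.
  intros Ht Hrt. pose proof (abs_cont01_cont01 X HXac) as Hc.
  destruct (inJ_cases (X t) (HXJ t ltac:(lra))) as [Hz | [m [a' [Hm [Ha' HXt]]]]].
  { exfalso. apply (Hafter t); auto. }
  assert (Hbr1 : inJstar e m (X 1)).
  { apply (stays_on_branch X m t 1); auto; try lra.
    - intros s Hs. apply Hafter. lra.
    - exists a'. split; auto. }
  assert (Hbpos : 0 < b).
  { destruct (Req_dec b 0) as [H0 | H0]; [| lra]. exfalso. apply (Hafter 1); [lra |].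
    rewrite HX1, H0. apply scal_zero. }
  assert (m = i) by (apply (inJstar_unique m i (X 1)); auto; rewrite HX1; exists b; split; auto).
  subst m.
  assert (Hst : inJstar e i (X t)) by (exists a'; split; auto).
  destruct (regular_on_branch X V f t i Hrt Hi Hst) as [p [HV Hf]].
  apply (straddle_of_local_derivative calibration (fun s => (L i q3 - s3 * q3) * s + s3 * coord e i (X s)) t
    ((L i q3 - s3 * q3) + s3 * coord e i (V t)) (f t) (G2 t2 - (L i q3 - s3 * q3) * t2) (t - t2)); try lra.
  - apply derivable_pt_lim_affine_coord, Hrt.
  - rewrite HV, coord_scal, Hf by auto. pose proof (L_tangent i p q3 Hi) as Htan. fold s3 in Htan. lra.
  - intros s Hs Hst2. apply Rabs_lt_iff in Hst2. rewrite calibration_after by lra. unfold G3. ring.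
Qed.

Lemma lower_bound_visiting_junction f c : ae01 (regular X V f) -> mcshane01 f c ->
  t1 * L j (- a / t1) + L0 N L 0 * (t2 - t1) + (1 - t2) * L i (b / (1 - t2)) <= c.
Proof.
  intros Hreg Hcost. fold q1 q3 l0. rewrite <- calibration_increment.
  apply (ftc_upper_bound f calibration c (fun t => (0 <= t <= 1 /\ ~ regular X V f t) \/
    t = t1 \/ t = t2 \/ (X t = pzero /\ has_deriv X t (V t) /\ V t <> pzero))); auto.
  - repeat apply negligible_union; auto using negligible_point, negligible_zero_crossings.
  - apply calibration_small_increments.
  - intros t Ht HnE.
    assert (Hrt : regular X V f t) by (apply NNPP; intros Hn; apply HnE; left; auto).
    assert (Htt1 : t <> t1) by (intros H; apply HnE; auto).
    assert (Htt2 : t <> t2) by (intros H; apply HnE; auto).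
    destruct (Rlt_le_dec t t1); [apply calibration_straddle_before; auto; lra |].
    destruct (Rlt_le_dec t t2); [| apply calibration_straddle_after; auto; lra].
    apply calibration_straddle_between; auto; [lra |].
    intros [Hz Hv]. apply HnE. right; right; right. split; [| split]; auto. apply Hrt.
Qed.

End JunctionVisit.

Lemma action_lower_bound X V y x c : inJ N e x -> inJ N e y -> admissible N e X V y x ->
  has_cost N e L X V c -> Rbar_le (Rbar_min (Dstraight N e L y x) (Djunction N e L y x)) (Fin c).
Proof.
  intros Hx Hy [HJ [HAC [HX0 [HX1 Hae]]]] [f [Hf Hmc]].
  assert (Hreg : ae01 (regular X V f)) by (apply ae01_and; auto).
  pose proof (abs_cont01_cont01 X HAC) as Hc.
  destruct (classic (exists t, 0 <= t <= 1 /\ X t = pzero)) as [Hz | Hnz].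
  2:{ eapply Rbar_le_trans; [apply Rbar_min_le_l |].
      apply (lower_bound_avoiding_junction X V f); auto. intros t Ht Hzt. apply Hnz. eauto. }
  eapply Rbar_le_trans; [apply Rbar_min_le_r |].
  destruct (first_zero_time X Hc Hz) as [t1 [Ht1 [HXt1 Hbefore]]].
  destruct (last_zero_time X Hc Hz) as [t2 [Ht2 [HXt2 Hafter]]].
  assert (Ht12 : t1 <= t2) by (destruct (Rle_lt_dec t1 t2); auto; exfalso; apply (Hafter t1); auto; lra).
  destruct Hy as [j [Hj [a [Ha Hya]]]]. destruct Hx as [i [Hi [b [Hb Hxb]]]]. subst y x.
  eapply Rbar_le_trans; [apply Einf_le; exists t1, t2; repeat split; try lra; reflexivity |].
  rewrite E1_scal_nonneg, E2_scal_nonneg; auto.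
  - pose proof (lower_bound_visiting_junction X V t1 t2 a b j i HJ HAC Hj Hi Ha Hb HX0 HX1
      ltac:(lra) Ht12 ltac:(lra) HXt1 HXt2 Hbefore Hafter f c Hreg Hmc). simpl. lra.
  - intros Hb0. destruct (Req_dec t2 1); auto. exfalso. apply (Hafter 1); [lra |].
    rewrite HX1, Hb0. apply scal_zero.
  - intros Hbp Ht. rewrite Ht, HX1 in HXt2. apply scal_e_zero in HXt2; auto. lra.
  - intros Ha0. destruct (Req_dec t1 0); auto. exfalso. apply (Hbefore 0); [lra |].
    rewrite HX0, Ha0. apply scal_zero.
  - intros Hap Ht. rewrite Ht, HX0 in HXt1. apply scal_e_zero in HXt1; auto. lra.
Qed.

(** * Upper bound *)

Lemma D0_le_cost X V y x c : admissible N e X V y x -> has_cost N e L X V c ->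
  Rbar_le (D0 N e L y x) (Fin c).
Proof. intros Ha Hc. apply Einf_le. exists X, V, c. auto. Qed.

Lemma admissible_of_regular X V f y x : (forall t, 0 <= t <= 1 -> inJ N e (X t)) ->
  abs_cont01 X -> X 0 = y -> X 1 = x -> ae01 (regular X V f) -> admissible N e X V y x.
Proof.
  intros HJ Hac H0 H1 Hreg. repeat split; auto.
  eapply negligible_subset; [apply Hreg |]. intros t [Ht Hn]. split; [auto |]. intros [Hd _]. auto.
Qed.

Lemma has_cost_of_regular X V f c : ae01 (regular X V f) -> mcshane01 f c -> has_cost N e L X V c.
Proof.
  intros Hreg Hc. exists f. split; [| auto].
  eapply negligible_subset; [apply Hreg |]. intros t [Ht Hn]. split; [auto |]. intros [_ Hl]. auto.
Qed.

Lemma straight_path_upper_bound i a b : (i < N)%nat -> 0 <= a -> 0 <= b -> ~ (a = 0 /\ b = 0) ->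
  Rbar_le (D0 N e L (scal a (e i)) (scal b (e i))) (Fin (L i (b - a))).
Proof.
  intros Hi Ha Hb Hab.
  set (X := fun t => scal (a + (b - a) * t) (e i)).
  set (V := fun _ : R => scal (b - a) (e i)). set (f := fun _ : R => L i (b - a)).
  assert (Hpos : forall t, 0 < t < 1 -> 0 < a + (b - a) * t).
  { intros t Ht. destruct (Req_dec a 0); destruct (Req_dec b 0); try tauto; nra. }
  assert (Hreg : ae01 (regular X V f)).
  { apply (ae01_off_two_points _ 0 0). intros t Ht _ _.
    apply (regular_on_branch_intro X V f t i (a + (b - a) * t) (b - a)); auto.
    apply (has_deriv_locally_affine X t a (b - a) (e i) 1); [lra | auto]. }
  apply (D0_le_cost X V).
  - apply (admissible_of_regular X V f); auto.
    + intros t Ht. exists i. split; [auto |]. exists (a + (b - a) * t). split; [nra | auto].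
    + apply (abs_cont01_of_lipschitz X (Rabs (b - a))); [apply Rabs_pos |].
      intros u v Hu Huv Hv. unfold X. rewrite pnorm_psub_same_branch by auto.
      replace (a + (b - a) * v - (a + (b - a) * u)) with ((b - a) * (v - u)) by ring.
      rewrite Rabs_mult, (Rabs_pos_eq (v - u)) by lra. lra.
    + unfold X. f_equal. ring.
    + unfold X. f_equal. ring.
  - apply (has_cost_of_regular X V f); auto.
    replace (L i (b - a)) with (L i (b - a) * 1 - L i (b - a) * 0) by ring.
    apply (mcshane01_locally_affine f (fun t => L i (b - a) * t) 0 0 (Rabs (L i (b - a))));
      [apply Rabs_pos | | | unfold f; lra ..].
    + intros u v. replace (L i (b - a) * v - L i (b - a) * u) with (L i (b - a) * (v - u)) by ring.
      rewrite Rabs_mult. lra.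
    + intros t _ _ _. exists 1. split; [lra | intros; unfold f; ring].
Qed.

Lemma Rmax0_diff_le p q : Rabs (Rmax 0 p - Rmax 0 q) <= Rabs (p - q).
Proof. unfold Rmax. repeat destruct Rle_dec; unfold Rabs; repeat destruct Rcase_abs; lra. Qed.

Lemma Rmin_diff_le u v c : Rabs (Rmin v c - Rmin u c) <= Rabs (v - u).
Proof. unfold Rmin. repeat destruct Rle_dec; unfold Rabs; repeat destruct Rcase_abs; lra. Qed.

Lemma Rmax_diff_le u v c : Rabs (Rmax c v - Rmax c u) <= Rabs (v - u).
Proof. unfold Rmax. repeat destruct Rle_dec; unfold Rabs; repeat destruct Rcase_abs; lra. Qed.

Section JunctionPath.

Variables (t1 t2 a b : R) (j i : nat).
Hypothesis Hj : (j < N)%nat.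
Hypothesis Hi : (i < N)%nat.
Hypothesis Ha : 0 <= a.
Hypothesis Hb : 0 <= b.
Hypothesis Ht1 : 0 <= t1.
Hypothesis Ht12 : t1 <= t2.
Hypothesis Ht2 : t2 <= 1.
Hypothesis Hat : 0 < a -> 0 < t1.
Hypothesis Hbt : 0 < b -> t2 < 1.

(* Move from [a e_j] to the origin at constant speed during [0, t1], rest there until
   [t2], then move to [b e_i] at constant speed.  A branch of length zero is replaced by
   resting, whose cost rate is [L_0(0)]. *)
Let l0 := L0 N L 0.
Let F1 := if Req_EM_T a 0 then l0 else L j (- a / t1).
Let F3 := if Req_EM_T b 0 then l0 else L i (b / (1 - t2)).
Let entry (t : R) : R := a * Rmax 0 (1 - t / t1).
Let exit (t : R) : R := b * Rmax 0 ((t - t2) / (1 - t2)).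
Let path (t : R) : pt := padd (scal (entry t) (e j)) (scal (exit t) (e i)).
Let velocity (t : R) : pt :=
  if Rlt_dec t t1 then scal (- a / t1) (e j) else if Rle_dec t t2 then pzero else scal (b / (1 - t2)) (e i).
Let running_cost (t : R) : R := if Rlt_dec t t1 then F1 else if Rle_dec t t2 then l0 else F3.

Lemma entry_after t : t1 <= t -> entry t = 0.
Proof.
  intros Ht. unfold entry. destruct (Req_dec a 0) as [-> | H0]; [ring |].
  assert (0 < t1) by (apply Hat; lra). rewrite Rmax_left; [ring |].
  assert (1 <= t / t1) by (apply (Rmult_le_reg_r t1); [auto | unfold Rdiv; rewrite Rmult_assoc, Rinv_l; lra]).
  lra.
Qed.

Lemma entry_before t : t <= t1 -> entry t = a + (- a / t1) * t.
Proof.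
  intros Ht. unfold entry. destruct (Req_dec a 0) as [-> | H0]; [unfold Rdiv; ring |].
  assert (0 < t1) by (apply Hat; lra). rewrite Rmax_right; [field; lra |].
  assert (t / t1 <= 1) by (apply (Rmult_le_reg_r t1); [auto | unfold Rdiv; rewrite Rmult_assoc, Rinv_l; lra]).
  lra.
Qed.

Lemma exit_before t : t <= t2 -> exit t = 0.
Proof.
  intros Ht. unfold exit. destruct (Req_dec b 0) as [-> | H0]; [ring |].
  assert (t2 < 1) by (apply Hbt; lra). rewrite Rmax_left; [ring |].
  assert (0 < / (1 - t2)) by (apply Rinv_0_lt_compat; lra). unfold Rdiv. nra.
Qed.

Lemma exit_after t : t2 <= t -> exit t = - b * t2 / (1 - t2) + (b / (1 - t2)) * t.
Proof.
  intros Ht. unfold exit. destruct (Req_dec b 0) as [-> | H0]; [unfold Rdiv; ring |].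
  assert (t2 < 1) by (apply Hbt; lra). rewrite Rmax_right; [field; lra |].
  unfold Rdiv. apply Rmult_le_pos; [lra | apply Rlt_le, Rinv_0_lt_compat; lra].
Qed.

Lemma path_before t : t <= t2 -> path t = scal (entry t) (e j).
Proof.
  intros Ht. unfold path. rewrite exit_before by auto. destruct (scal (entry t) (e j)).
  unfold padd, scal; simpl. f_equal; ring.
Qed.

Lemma path_after t : t1 <= t -> path t = scal (exit t) (e i).
Proof.
  intros Ht. unfold path. rewrite entry_after by auto. destruct (scal (exit t) (e i)).
  unfold padd, scal; simpl. f_equal; ring.
Qed.

Lemma path_inJ t : 0 <= t <= 1 -> inJ N e (path t).
Proof.
  intros Ht. destruct (Rle_dec t t2).
  - rewrite path_before by auto. exists j. split; [auto |]. exists (entry t).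
    split; [apply Rmult_le_pos; [auto | apply Rmax_l] | auto].
  - rewrite path_after by lra. exists i. split; [auto |]. exists (exit t).
    split; [apply Rmult_le_pos; [auto | apply Rmax_l] | auto].
Qed.

Lemma path_lipschitz : exists K, 0 <= K /\
  forall u v, 0 <= u -> u <= v -> v <= 1 -> pnorm (psub (path v) (path u)) <= K * (v - u).
Proof.
  exists (a * Rabs (/ t1) + b * Rabs (/ (1 - t2))).
  pose proof (Rabs_pos (/ t1)); pose proof (Rabs_pos (/ (1 - t2))). split; [nra |].
  intros u v Hu Huv Hv. unfold path.
  replace (psub (padd (scal (entry v) (e j)) (scal (exit v) (e i))) (padd (scal (entry u) (e j)) (scal (exit u) (e i))))
    with (padd (scal (entry v - entry u) (e j)) (scal (exit v - exit u) (e i)))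
    by (unfold psub, padd, scal; simpl; f_equal; ring).
  eapply Rle_trans; [apply pnorm_padd_le |]. rewrite !pnorm_scal, !He1, !Rmult_1_r by auto.
  assert (Rabs (entry v - entry u) <= a * Rabs (/ t1) * (v - u)).
  { unfold entry. rewrite <- Rmult_minus_distr_l, Rabs_mult, (Rabs_pos_eq a), Rmult_assoc by auto.
    apply Rmult_le_compat_l; [auto |]. eapply Rle_trans; [apply Rmax0_diff_le |].
    replace (1 - v / t1 - (1 - u / t1)) with ((u - v) * / t1) by (unfold Rdiv; ring).
    rewrite Rabs_mult, Rabs_minus_sym, (Rabs_pos_eq (v - u)) by lra. lra. }
  assert (Rabs (exit v - exit u) <= b * Rabs (/ (1 - t2)) * (v - u)).
  { unfold exit. rewrite <- Rmult_minus_distr_l, Rabs_mult, (Rabs_pos_eq b), Rmult_assoc by auto.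
    apply Rmult_le_compat_l; [auto |]. eapply Rle_trans; [apply Rmax0_diff_le |].
    replace ((v - t2) / (1 - t2) - (u - t2) / (1 - t2)) with ((v - u) * / (1 - t2)) by (unfold Rdiv; ring).
    rewrite Rabs_mult, (Rabs_pos_eq (v - u)) by lra. lra. }
  lra.
Qed.

Lemma F1_at_rest : a = 0 -> F1 = l0.
Proof. unfold F1. destruct (Req_EM_T a 0); intros; [reflexivity || tauto ..]. Qed.

Lemma F1_moving : a <> 0 -> F1 = L j (- a / t1).
Proof. unfold F1. destruct (Req_EM_T a 0); intros; [reflexivity || tauto ..]. Qed.

Lemma F3_at_rest : b = 0 -> F3 = l0.
Proof. unfold F3. destruct (Req_EM_T b 0); intros; [reflexivity || tauto ..]. Qed.

Lemma F3_moving : b <> 0 -> F3 = L i (b / (1 - t2)).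
Proof. unfold F3. destruct (Req_EM_T b 0); intros; [reflexivity || tauto ..]. Qed.

Lemma path_regular_entering t : 0 < t < t1 -> regular path velocity running_cost t.
Proof.
  intros Ht.
  assert (HV : velocity t = scal (- a / t1) (e j)) by (unfold velocity; destruct Rlt_dec; [auto | lra]).
  assert (Hf : running_cost t = F1) by (unfold running_cost; destruct Rlt_dec; [auto | lra]).
  assert (Hd : has_deriv path t (scal (- a / t1) (e j))).
  { apply (has_deriv_locally_affine path t a (- a / t1) (e j) (t1 - t)); [lra |].
    intros s Hs. apply Rabs_lt_iff in Hs. rewrite path_before, entry_before by lra. auto. }
  destruct (Req_dec a 0) as [H0 | H0].
  - assert (Hv0 : scal (- a / t1) (e j) = pzero)
      by (rewrite H0; unfold Rdiv; rewrite Ropp_0, Rmult_0_l; apply scal_zero).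
    rewrite Hv0 in Hd, HV. apply regular_at_rest_intro; auto.
    + rewrite path_before, entry_before, H0 by lra. unfold Rdiv.
      rewrite Ropp_0, !Rmult_0_l, Rplus_0_l. apply scal_zero.
    + rewrite Hf, F1_at_rest; auto.
  - apply (regular_on_branch_intro path velocity running_cost t j (entry t) (- a / t1)); auto.
    + rewrite entry_before by lra. replace (a + - a / t1 * t) with (a * (1 - t / t1)) by (field; lra).
      apply Rmult_lt_0_compat; [lra |].
      assert (t / t1 < 1) by (apply (Rmult_lt_reg_r t1); [lra | unfold Rdiv; rewrite Rmult_assoc, Rinv_l; lra]).
      lra.
    + apply path_before. lra.
    + rewrite Hf, F1_moving; auto.
Qed.

Lemma path_regular_resting t : t1 < t < t2 -> regular path velocity running_cost t.
Proof.
  intros Ht.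
  assert (HV : velocity t = pzero) by (unfold velocity; destruct Rlt_dec; [lra | destruct Rle_dec; [auto | lra]]).
  assert (Hf : running_cost t = l0) by (unfold running_cost; destruct Rlt_dec; [lra | destruct Rle_dec; [auto | lra]]).
  assert (Hd : has_deriv path t (scal 0 (e j))).
  { apply (has_deriv_locally_affine path t 0 0 (e j) (Rmin (t - t1) (t2 - t))); [apply Rmin_case; lra |].
    intros s Hs. pose proof (Rmin_l (t - t1) (t2 - t)). pose proof (Rmin_r (t - t1) (t2 - t)).
    apply Rabs_lt_iff in Hs. rewrite path_before, entry_after by lra. f_equal. ring. }
  rewrite scal_zero in Hd. apply regular_at_rest_intro; auto.
  rewrite path_before, entry_after by lra. apply scal_zero.
Qed.

Lemma path_regular_exiting t : t2 < t < 1 -> regular path velocity running_cost t.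
Proof.
  intros Ht.
  assert (HV : velocity t = scal (b / (1 - t2)) (e i))
    by (unfold velocity; destruct Rlt_dec; [lra | destruct Rle_dec; [lra | auto]]).
  assert (Hf : running_cost t = F3) by (unfold running_cost; destruct Rlt_dec; [lra | destruct Rle_dec; [lra | auto]]).
  assert (Hd : has_deriv path t (scal (b / (1 - t2)) (e i))).
  { apply (has_deriv_locally_affine path t (- b * t2 / (1 - t2)) (b / (1 - t2)) (e i) (t - t2)); [lra |].
    intros s Hs. apply Rabs_lt_iff in Hs. rewrite path_after, exit_after by lra. auto. }
  destruct (Req_dec b 0) as [H0 | H0].
  - assert (Hv0 : scal (b / (1 - t2)) (e i) = pzero)
      by (rewrite H0; unfold Rdiv; rewrite Rmult_0_l; apply scal_zero).
    rewrite Hv0 in Hd, HV. apply regular_at_rest_intro; auto.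
    + rewrite path_after, exit_after, H0 by lra. unfold Rdiv.
      rewrite Ropp_0, !Rmult_0_l, Rplus_0_l. apply scal_zero.
    + rewrite Hf, F3_at_rest; auto.
  - apply (regular_on_branch_intro path velocity running_cost t i (exit t) (b / (1 - t2))); auto.
    + rewrite exit_after by lra.
      replace (- b * t2 / (1 - t2) + b / (1 - t2) * t) with (b * ((t - t2) / (1 - t2))) by (field; lra).
      apply Rmult_lt_0_compat; [lra | apply Rdiv_lt_0_compat; lra].
    + apply path_after. lra.
    + rewrite Hf, F3_moving; auto.
Qed.

Lemma path_regular t : 0 < t < 1 -> t <> t1 -> t <> t2 -> regular path velocity running_cost t.
Proof.
  intros Ht Htt1 Htt2. destruct (Rlt_le_dec t t1); [apply path_regular_entering; lra |].
  destruct (Rlt_le_dec t t2); [apply path_regular_resting | apply path_regular_exiting]; lra.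
Qed.

Lemma path_cost : mcshane01 running_cost (t1 * F1 + (t2 - t1) * l0 + (1 - t2) * F3).
Proof.
  set (G := fun t => F1 * Rmin t t1 + l0 * (Rmax t1 (Rmin t t2) - t1) + F3 * Rmax 0 (t - t2)).
  replace (t1 * F1 + (t2 - t1) * l0 + (1 - t2) * F3) with (G 1 - G 0).
  2:{ unfold G. rewrite (Rmin_right 1 t1), (Rmin_right 1 t2), (Rmax_right t1 t2), (Rmax_right 0 (1 - t2)) by lra.
      rewrite (Rmin_left 0 t1), (Rmin_left 0 t2), (Rmax_left t1 0), (Rmax_left 0 (0 - t2)) by lra. ring. }
  pose proof (Rabs_pos F1); pose proof (Rabs_pos l0); pose proof (Rabs_pos F3).
  assert (Hbound : forall t, Rabs (running_cost t) <= Rabs F1 + Rabs l0 + Rabs F3)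
    by (intros t; unfold running_cost; destruct Rlt_dec; [| destruct Rle_dec]; lra).
  apply (mcshane01_locally_affine running_cost G t1 t2 (Rabs F1 + Rabs l0 + Rabs F3)); auto; [lra | |].
  - intros u v. unfold G.
    replace (F1 * Rmin v t1 + l0 * (Rmax t1 (Rmin v t2) - t1) + F3 * Rmax 0 (v - t2)
             - (F1 * Rmin u t1 + l0 * (Rmax t1 (Rmin u t2) - t1) + F3 * Rmax 0 (u - t2)))
      with (F1 * (Rmin v t1 - Rmin u t1) + l0 * (Rmax t1 (Rmin v t2) - Rmax t1 (Rmin u t2))
            + F3 * (Rmax 0 (v - t2) - Rmax 0 (u - t2))) by ring.
    pose proof (Rmin_diff_le u v t1). pose proof (Rmin_diff_le u v t2).
    pose proof (Rmax_diff_le (Rmin u t2) (Rmin v t2) t1). pose proof (Rmax0_diff_le (v - t2) (u - t2)) as Hexit.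
    replace (v - t2 - (u - t2)) with (v - u) in Hexit by ring.
    eapply Rle_trans; [apply Rabs_triang |]. eapply Rle_trans; [apply Rplus_le_compat_r, Rabs_triang |].
    rewrite !Rabs_mult.
    assert (Rabs F1 * Rabs (Rmin v t1 - Rmin u t1) <= Rabs F1 * Rabs (v - u)) by (apply Rmult_le_compat_l; auto).
    assert (Rabs l0 * Rabs (Rmax t1 (Rmin v t2) - Rmax t1 (Rmin u t2)) <= Rabs l0 * Rabs (v - u))
      by (apply Rmult_le_compat_l; lra).
    assert (Rabs F3 * Rabs (Rmax 0 (v - t2) - Rmax 0 (u - t2)) <= Rabs F3 * Rabs (v - u))
      by (apply Rmult_le_compat_l; auto).
    lra.
  - intros t Ht Htt1 Htt2. unfold running_cost. destruct (Rlt_dec t t1) as [Hlt | Hge].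
    + exists (t1 - t). split; [lra |]. intros u v Hu Hv. apply Rabs_lt_iff in Hu, Hv. unfold G.
      rewrite (Rmin_left u t1), (Rmin_left v t1), (Rmin_left u t2), (Rmin_left v t2), (Rmax_left t1 u),
        (Rmax_left t1 v), (Rmax_left 0 (u - t2)), (Rmax_left 0 (v - t2)) by lra. ring.
    + destruct (Rle_dec t t2) as [Hle | Hgt].
      * exists (Rmin (t - t1) (t2 - t)). split; [apply Rmin_case; lra |].
        intros u v Hu Hv. pose proof (Rmin_l (t - t1) (t2 - t)). pose proof (Rmin_r (t - t1) (t2 - t)).
        apply Rabs_lt_iff in Hu, Hv. unfold G.
        rewrite (Rmin_right u t1), (Rmin_right v t1), (Rmin_left u t2), (Rmin_left v t2), (Rmax_right t1 u),
          (Rmax_right t1 v), (Rmax_left 0 (u - t2)), (Rmax_left 0 (v - t2)) by lra. ring.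
      * exists (t - t2). split; [lra |]. intros u v Hu Hv. apply Rabs_lt_iff in Hu, Hv. unfold G.
        rewrite (Rmin_right u t1), (Rmin_right v t1), (Rmin_right u t2), (Rmin_right v t2), (Rmax_right t1 t2),
          (Rmax_right 0 (u - t2)), (Rmax_right 0 (v - t2)) by lra. ring.
Qed.

Lemma junction_value :
  Rbar_plus (Defs.E1 N e L t1 (scal a (e j))) (Defs.E2 N e L t2 (scal b (e i)))
  = Fin (t1 * F1 + (t2 - t1) * l0 + (1 - t2) * F3).
Proof.
  assert (HE1 : Defs.E1 N e L t1 (scal a (e j)) = Fin (t1 * F1 - t1 * l0)).
  { destruct (Req_dec a 0) as [Ha0 | Ha0].
    - rewrite Ha0, scal_zero, E1_zero, F1_at_rest by auto. f_equal. ring.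
    - rewrite E1_scal, F1_moving by (auto; lra || (assert (0 < t1) by (apply Hat; lra); lra)). auto. }
  assert (HE2 : Defs.E2 N e L t2 (scal b (e i)) = Fin ((1 - t2) * F3 + t2 * l0)).
  { destruct (Req_dec b 0) as [Hb0 | Hb0].
    - rewrite Hb0, scal_zero, E2_zero, F3_at_rest by auto. f_equal. unfold l0. ring.
    - rewrite E2_scal, F3_moving by (auto; lra || (assert (t2 < 1) by (apply Hbt; lra); lra)). auto. }
  rewrite HE1, HE2. simpl. f_equal. ring.
Qed.

Lemma junction_path_upper_bound : Rbar_le (D0 N e L (scal a (e j)) (scal b (e i)))
  (Rbar_plus (Defs.E1 N e L t1 (scal a (e j))) (Defs.E2 N e L t2 (scal b (e i)))).
Proof.
  assert (Hreg : ae01 (regular path velocity running_cost))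
    by (apply (ae01_off_two_points _ t1 t2); intros; apply path_regular; auto).
  rewrite junction_value. apply (D0_le_cost path velocity).
  - apply (admissible_of_regular path velocity running_cost); auto.
    + apply path_inJ.
    + destruct path_lipschitz as [K [HK HLip]]. apply (abs_cont01_of_lipschitz path K); auto.
    + rewrite path_before, entry_before by lra. f_equal. unfold Rdiv. ring.
    + rewrite path_after, exit_after by lra. f_equal. destruct (Req_dec b 0) as [H0 | H0]; [rewrite H0; unfold Rdiv; ring |].
      assert (t2 < 1) by (apply Hbt; lra). field. lra.
  - apply (has_cost_of_regular path velocity running_cost); auto. apply path_cost.
Qed.

End JunctionPath.

Lemma D0_le_Djunction x y : inJ N e x -> inJ N e y -> Rbar_le (D0 N e L y x) (Djunction N e L y x).
Proof.
  intros [i [Hi [b [Hb ->]]]] [j [Hj [a [Ha ->]]]]. apply le_Einf.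
  intros z [t1 [t2 [Ht1 [Ht12 [Ht2 ->]]]]].
  destruct (classic (0 < a /\ t1 = 0)) as [[Hap ->] | Hn1].
  { rewrite E1_at_0; [apply Rbar_le_PInf |]. intros Hz. apply scal_e_zero in Hz; auto. lra. }
  destruct (classic (0 < b /\ t2 = 1)) as [[Hbp ->] | Hn2].
  { rewrite E2_at_1, Rbar_plus_PInf_r; [apply Rbar_le_PInf |]. intros Hz. apply scal_e_zero in Hz; auto. lra. }
  apply junction_path_upper_bound; auto.
  - intros Hap. destruct (Req_dec t1 0); [exfalso; apply Hn1 | lra]; auto.
  - intros Hbp. destruct (Req_dec t2 1); [exfalso; apply Hn2 | lra]; auto.
Qed.

Lemma D0_le_Dstraight x y : inJ N e x -> inJ N e y -> Rbar_le (D0 N e L y x) (Dstraight N e L y x).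
Proof.
  assert (Hsame : forall k a b, (k < N)%nat -> 0 <= a -> 0 <= b ->
     Rbar_le (D0 N e L (scal a (e k)) (scal b (e k))) (Dstraight N e L (scal a (e k)) (scal b (e k)))).
  { intros k a b Hk Ha Hb. destruct (classic (a = 0 /\ b = 0)) as [[-> ->] | Hn].
    - rewrite scal_zero, Dstraight_zero.
      pose proof (junction_path_upper_bound 0 0 0 0 k k Hk Hk ltac:(lra) ltac:(lra) ltac:(lra) ltac:(lra)
        ltac:(lra) ltac:(lra) ltac:(lra)) as Hjp.
      rewrite scal_zero, E1_zero, E2_zero in Hjp. simpl in Hjp. rewrite Rplus_0_l in Hjp. auto.
    - rewrite Dstraight_same_branch by auto. apply straight_path_upper_bound; auto. }
  intros [i [Hi [b [Hb ->]]]] [j [Hj [a [Ha ->]]]].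
  destruct (Nat.eq_dec i j) as [-> | Hij]; [apply Hsame; auto |].
  destruct (Req_dec a 0) as [-> | Ha0].
  { replace (scal 0 (e j)) with (scal 0 (e i)) by (rewrite !scal_zero; auto). apply Hsame; auto; lra. }
  destruct (Req_dec b 0) as [-> | Hb0].
  { replace (scal 0 (e i)) with (scal 0 (e j)) by (rewrite !scal_zero; auto). apply Hsame; auto; lra. }
  rewrite Dstraight_distinct_branches by (auto; lra). apply Rbar_le_PInf.
Qed.

End Junction.

Theorem mainTheorem15 (N : nat) (e : nat -> pt) (L : nat -> R -> R) (gamma : R) :
  (1 <= N)%nat ->
  (forall i, (i < N)%nat -> pnorm (e i) = 1) ->
  (forall i j, (i < N)%nat -> (j < N)%nat -> e i = e j -> i = j) ->
  0 < gamma ->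
  (forall i, (i < N)%nat -> C2_convex gamma (L i)) ->
  forall x y : pt, inJ N e x -> inJ N e y ->
    D0 N e L y x = Rbar_min (Dstraight N e L y x) (Djunction N e L y x).
Proof.
  intros HN He1 Hinj Hgamma HL x y Hx Hy.
  apply Rbar_le_antisym.
  - apply Rbar_min_glb; [apply D0_le_Dstraight | apply D0_le_Djunction]; auto.
  - apply le_Einf. intros z [X [V [c [Hadm [Hcost ->]]]]].
    apply (action_lower_bound N e L gamma HN He1 Hinj Hgamma HL X V y x c); auto.
Qed.
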